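(* Let $s\ge1$ and suppose Assumptions 1, 2 and 3 hold with the same constant $0\le\delta_s<1$. Then there exists a constant $C_U>0$ depending only on $a_u$ and $a_\ell$ such that $$\inf_{\hat f}\ \sup_{f^*\in\mathcal{F}_{T,s,D}}\mathbb{E}\big[\|\hat f-f^*\|_2^2\big]\ \le\ C_U\min\left(\frac{s\log_2 p}{(1-\delta_s)T}+\frac{s\log_2(T+1)}{(1-\delta_s)T},\ s\max_{j,k}|D_{j,k}|^2,\ 1\right),$$ where the infimum is over all measurable estimators $\hat f$ of $f^*$ based on $y$ (which may depend on $T$, $A$, $D$).
   Context: Setup: $n,p\ge1$ integers, $T>0$. $D\in\mathbb{R}^{p\times p}$ is an orthonormal matrix with columns $d_1,\dots,d_p$, where $d_1=p^{-1/2}(1,\dots,1)^\top$; $\bar D=[d_2,\dots,d_p]\in\mathbb{R}^{p\times(p-1)}$. For an integer $s\ge1$, $\mathcal{F}_{T,s,D}=\{f\in\mathbb{R}^p_{\ge0}:\ \|f\|_1=1,\ \|\bar D^\top f\|_0\le s\}$, where $\|v\|_0$ is the number of nonzero entries. Given a sensing matrix $A\in\mathbb{R}^{n\times p}$ and $f^*\in\mathcal{F}_{T,s,D}$, the observation is $y=(y_1,\dots,y_n)$ with independent $y_i\sim\mathrm{Poisson}(T(Af^* )_i)$; expectation is over $y$. Assumption 1: there are constants $a_\ell<a_u$ and a matrix $\widetilde A\in\mathbb{R}^{n\times p}$ with all entries in $[a_\ell/\sqrt n,a_u/\sqrt n]$ such that $A=\big(\widetilde A+\frac{a_u-2a_\ell}{\sqrt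 n}\mathbb{1}_{n\times p}\big)/\big(2(a_u-a_\ell)\sqrt n\big)$, with $\mathbb{1}_{n\times p}$ the all-ones matrix. Assumption 2: there is $\delta_s\ge0$ such that $\|\widetilde A D u\|_2^2\le(1+\delta_s)\|u\|_2^2$ for all $u\in\mathbb{R}^p$ with $\|u\|_0\le 2s$. Assumption 3: with the same $\delta_s$, $\|\widetilde A D u\|_2^2\ge(1-\delta_s)\|u\|_2^2$ for all $u\in\mathbb{R}^p$ with $\|u\|_0\le 2s$. *)

From Stdlib Require Import Reals List Arith.
Import ListNotations.
Open Scope R_scope.

Definition rsum (n : nat) (F : nat -> R) : R :=
  fold_right Rplus 0 (map F (seq 0 n)).

Definition rprod (n : nat) (F : nat -> R) : R :=
  fold_right Rmult 1 (map F (seq 0 n)).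

Definition count_nz (lo len : nat) (v : nat -> R) : nat :=
  length (filter (fun i => if Req_EM_T (v i) 0 then false else true) (seq lo len)).

Definition l0 (p : nat) (u : nat -> R) : nat := count_nz 0 p u.

Definition sqnorm (p : nat) (u : nat -> R) : R := rsum p (fun j => (u j)^2).

Definition matvec (m : nat) (M : nat -> nat -> R) (v : nat -> R) : nat -> R :=
  fun i => rsum m (fun j => M i j * v j).

Definition orthonormal (p : nat) (D : nat -> nat -> R) : Prop :=
  forall i j, (i < p)%nat -> (j < p)%nat ->
    rsum p (fun k => D k i * D k j) = if Nat.eqb i j then 1 else 0.

Definition first_col_const (p : nat) (D : nat -> nat -> R) : Prop :=
  forall k, (k < p)%nat -> D k 0%nat = / sqrt (INR p).

(* ||Dbar^T f||_0 where Dbar = [d_2,...,d_p]: count of j in {1..p-1}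
   with <d_j, f> <> 0 *)
Definition Dbar_l0 (p : nat) (D : nat -> nat -> R) (f : nat -> R) : nat :=
  count_nz 1 (p - 1) (fun j => rsum p (fun k => D k j * f k)).

Definition in_F (p s : nat) (D : nat -> nat -> R) (f : nat -> R) : Prop :=
  (forall j, (j < p)%nat -> 0 <= f j) /\
  rsum p f = 1 /\
  (Dbar_l0 p D f <= s)%nat.

Definition max_abs2 (p : nat) (D : nat -> nat -> R) : R :=
  fold_right Rmax 0
    (flat_map (fun j => map (fun k => (Rabs (D j k))^2) (seq 0 p)) (seq 0 p)).

Definition log2 (x : R) : R := ln x / ln 2.

Definition poisson_pmf (lam : R) (k : nat) : R :=
  exp (- lam) * lam ^ k / INR (fact k).

Fixpoint box (n N : nat) : list (list nat) :=
  match n with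
  | O => [ [] ]
  | S m => flat_map (fun k => map (cons k) (box m N)) (seq 0 (S N))
  end.

Definition joint_pmf (lam : nat -> R) (y : list nat) : R :=
  rprod (length y) (fun i => poisson_pmf (lam i) (nth i y 0%nat)).

Definition box_expect (n N : nat) (lam : nat -> R) (g : list nat -> R) : R :=
  fold_right Rplus 0 (map (fun y => joint_pmf lam y * g y) (box n N)).

(* E[g(y)] <= B for a NONNEGATIVE g, y_i ~ Poisson(lam i) independent, i < n.
   By monotone convergence E[g(y)] = sup_N box_expect n N lam g, so
   E[g(y)] <= B iff every truncated sum is <= B. *)
Definition expect_le (n : nat) (lam : nat -> R) (g : list nat -> R) (B : R) : Prop :=
  forall N : nat, box_expect n N lam g <= B.

(* Two estimators cover the three terms of the minimum.  The constant estimator [1/p] errs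
   exactly by the coordinates of [f*] along [d_2, ..., d_p]; their squared norm is at most
   [|f*|^2 <= 1] and, as at most [s] of them are nonzero and each is bounded by
   [max_{j,k} |D_{j,k}|], at most [s max |D_{j,k}|^2].  This also handles [T < 1], where the
   first term exceeds [1/2].

   For [T >= 1] we maximise the likelihood over a finite net: coordinate vectors whose
   [d_1]-coordinate is [1/sqrt p] and which have at most [s] further coordinates on the grid
   [(1/M) Z], [M ~ p^2 T], kept only if their signal is L1-close to the class.  The signals of two
   net points differ by a zero-sum vector, on which Assumption 1 makes [A] act as
   [At / (2 (a_u - a_l) sqrt n)], so Assumption 3 separates their Poisson intensities.  If [u0]
   is the net point next to [f*], the Bhattacharyya bound gives, for every competitor [u],
   E[sqrt (L_u / L_u0)] <= exp (1/2 - c T (1 - delta) |u - u0|^2), and a union bound over the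
   [(p (2M + 1))^s] net points shows that the maximiser lies within squared distance
   [r ~ s log (p T) / ((1 - delta) T)] of [u0] except on an event of negligible cost. *)
From Stdlib Require Import Reals List Arith Lra Lia ZArith.
From Stdlib Require Import ClassicalEpsilon.
From mathcomp Require all_boot all_algebra Rstruct.
Import ListNotations.
Open Scope R_scope.

Definition lsum {A : Type} (G : A -> R) (l : list A) : R := fold_right Rplus 0 (map G l).

Lemma lsum_app {A} (G : A -> R) la lb : lsum G (la ++ lb) = lsum G la + lsum G lb.
Proof.
  unfold lsum. rewrite map_app, fold_right_app.
  generalize (map G la). induction l; simpl; lra.
Qed.

Lemma lsum_flat_map {A B} (G : B -> R) (F : A -> list B) l :
  lsum G (flat_map F l) = lsum (fun x => lsum G (F x)) l.
Proof. induction l as [|a l IH]; simpl; [reflexivity | rewrite lsum_app, IH; reflexivity]. Qed.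

Lemma lsum_map {A B} (G : B -> R) (F : A -> B) l : lsum G (map F l) = lsum (fun x => G (F x)) l.
Proof. unfold lsum. rewrite map_map. reflexivity. Qed.

Lemma lsum_scal {A} c (G : A -> R) l : lsum (fun x => c * G x) l = c * lsum G l.
Proof. induction l as [|a l IH]; unfold lsum in *; cbn; [ring | rewrite IH; ring]. Qed.

Lemma lsum_add {A} (G H : A -> R) l : lsum (fun x => G x + H x) l = lsum G l + lsum H l.
Proof. induction l as [|a l IH]; unfold lsum in *; cbn; [ring | rewrite IH; ring]. Qed.

Lemma lsum_le {A} (G H : A -> R) l : (forall x, In x l -> G x <= H x) -> lsum G l <= lsum H l.
Proof.
  induction l as [|a l IH]; intros Hle; unfold lsum in *; cbn; [lra|].
  specialize (Hle a (or_introl eq_refl)) as Ha.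
  assert (fold_right Rplus 0 (map G l) <= fold_right Rplus 0 (map H l))
    by (apply IH; intros; apply Hle; right; auto).
  lra.
Qed.

Lemma lsum_ext {A} (G H : A -> R) l : (forall x, In x l -> G x = H x) -> lsum G l = lsum H l.
Proof. intros E. apply Rle_antisym; apply lsum_le; intros x Hx; rewrite E by auto; lra. Qed.

Lemma lsum_nonneg {A} (G : A -> R) l : (forall x, In x l -> 0 <= G x) -> 0 <= lsum G l.
Proof.
  induction l as [|a l IH]; intros Hpos; unfold lsum in *; cbn; [lra|].
  assert (0 <= G a) by (apply Hpos; left; auto).
  assert (0 <= fold_right Rplus 0 (map G l)) by (apply IH; intros; apply Hpos; right; auto).
  lra.
Qed.

Lemma lsum_term_le {A} (G : A -> R) l x :
  (forall y, In y l -> 0 <= G y) -> In x l -> G x <= lsum G l.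
Proof.
  induction l as [|a l IH]; intros Hpos Hx; [destruct Hx|]. unfold lsum in *; cbn.
  assert (Hl : 0 <= fold_right Rplus 0 (map G l))
    by (apply (lsum_nonneg G l); intros; apply Hpos; right; auto).
  assert (Ha : 0 <= G a) by (apply Hpos; left; auto).
  destruct Hx as [<-|Hx]; [lra|].
  assert (G x <= fold_right Rplus 0 (map G l)) by (apply IH; auto; intros; apply Hpos; right; auto).
  lra.
Qed.

Lemma lsum_le_length_mul {A} (G : A -> R) l c :
  (forall x, In x l -> G x <= c) -> lsum G l <= INR (length l) * c.
Proof.
  induction l as [|a l IH]; intros Hle; unfold lsum in *; cbn [map fold_right length]; [simpl; lra|].
  rewrite S_INR. assert (G a <= c) by (apply Hle; left; auto).
  assert (fold_right Rplus 0 (map G l) <= INR (length l) * c)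
    by (apply IH; intros; apply Hle; right; auto).
  lra.
Qed.

Lemma lsum_select_NoDup (l : list nat) j (G : nat -> R) : NoDup l ->
  lsum (fun j' => if Nat.eqb j' j then G j' else 0) l = if in_dec Nat.eq_dec j l then G j else 0.
Proof.
  induction l as [|x l IH]; intros Hnd; [reflexivity|].
  inversion Hnd as [|? ? Hx Hnd']; subst.
  change (lsum (fun j' => if Nat.eqb j' j then G j' else 0) (x :: l)) with
    ((if Nat.eqb x j then G x else 0) + lsum (fun j' => if Nat.eqb j' j then G j' else 0) l).
  rewrite IH by auto. destruct (Nat.eqb_spec x j) as [<-|Hxj].
  - destruct (in_dec Nat.eq_dec x l); [contradiction|].
    destruct (in_dec Nat.eq_dec x (x :: l)) as [|Hin]; [ring | exfalso; apply Hin; left; auto].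
  - destruct (in_dec Nat.eq_dec j l) as [i1|i1]; destruct (in_dec Nat.eq_dec j (x :: l)) as [i2|i2].
    + ring.
    + exfalso; apply i2; right; auto.
    + destruct i2; [congruence | contradiction].
    + ring.
Qed.

Lemma rsum_lsum n F : rsum n F = lsum F (seq 0 n).
Proof. reflexivity. Qed.

Lemma rsum_recr n F : rsum (S n) F = rsum n F + F n.
Proof. rewrite !rsum_lsum, seq_S, lsum_app. unfold lsum at 2. simpl. ring. Qed.

Lemma rsum_recl n F : rsum (S n) F = F 0%nat + rsum n (fun i => F (S i)).
Proof. unfold rsum. simpl. f_equal. rewrite <- seq_shift, map_map. reflexivity. Qed.

Lemma rsum_ext n F G : (forall i, (i < n)%nat -> F i = G i) -> rsum n F = rsum n G.
Proof. intros E. apply lsum_ext. intros i Hi. apply in_seq in Hi. apply E. lia. Qed.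

Lemma rsum_le n F G : (forall i, (i < n)%nat -> F i <= G i) -> rsum n F <= rsum n G.
Proof. intros Hle. apply lsum_le. intros i Hi. apply in_seq in Hi. apply Hle. lia. Qed.

Lemma rsum_nonneg n F : (forall i, (i < n)%nat -> 0 <= F i) -> 0 <= rsum n F.
Proof. intros Hpos. apply lsum_nonneg. intros i Hi. apply in_seq in Hi. apply Hpos. lia. Qed.

Lemma rsum_term_le n F j :
  (forall i, (i < n)%nat -> 0 <= F i) -> (j < n)%nat -> F j <= rsum n F.
Proof.
  intros Hpos Hj. apply lsum_term_le; [|apply in_seq; lia].
  intros i Hi. apply in_seq in Hi. apply Hpos. lia.
Qed.

Lemma rsum_add n F G : rsum n (fun i => F i + G i) = rsum n F + rsum n G.
Proof. apply lsum_add. Qed.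

Lemma rsum_scal n c F : rsum n (fun i => c * F i) = c * rsum n F.
Proof. apply lsum_scal. Qed.

Lemma rsum_sub n F G : rsum n (fun i => F i - G i) = rsum n F - rsum n G.
Proof.
  rewrite (rsum_ext n _ (fun i => F i + (-1) * G i)) by (intros; ring).
  rewrite rsum_add, rsum_scal. ring.
Qed.

Lemma rsum_const n c : rsum n (fun _ => c) = INR n * c.
Proof. induction n as [|n IH]; [simpl; unfold rsum; simpl; ring | rewrite rsum_recr, IH, S_INR; ring]. Qed.

Lemma rsum_abs_le n F : Rabs (rsum n F) <= rsum n (fun i => Rabs (F i)).
Proof.
  induction n as [|n IH]; [unfold rsum; simpl; rewrite Rabs_R0; lra|].
  rewrite !rsum_recr. eapply Rle_trans; [apply Rabs_triang | lra].
Qed.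

Lemma rsum_exchange n m (F : nat -> nat -> R) :
  rsum n (fun i => rsum m (fun j => F i j)) = rsum m (fun j => rsum n (fun i => F i j)).
Proof.
  induction n as [|n IH].
  - rewrite (rsum_ext m _ (fun _ => 0)) by reflexivity. rewrite rsum_const. unfold rsum; simpl; ring.
  - rewrite rsum_recr, IH, <- rsum_add. apply rsum_ext. intros. rewrite rsum_recr. reflexivity.
Qed.

Lemma rsum_kronecker n F j : (j < n)%nat ->
  rsum n (fun i => F i * (if Nat.eqb j i then 1 else 0)) = F j.
Proof.
  intros Hj. rewrite rsum_lsum.
  rewrite (lsum_ext _ (fun i => if Nat.eqb i j then F i else 0)).
  - rewrite lsum_select_NoDup by apply seq_NoDup.
    destruct (in_dec Nat.eq_dec j (seq 0 n)) as [|Hn]; [reflexivity|].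
    exfalso. apply Hn, in_seq. lia.
  - intros i _. rewrite Nat.eqb_sym. destruct (Nat.eqb_spec i j); subst; ring.
Qed.

Lemma rsum_sqr n F : (rsum n F)^2 = rsum n (fun i => rsum n (fun j => F i * F j)).
Proof.
  simpl. rewrite Rmult_1_r, <- (rsum_scal n (rsum n F) F). apply rsum_ext. intros i _.
  rewrite Rmult_comm, <- rsum_scal. reflexivity.
Qed.

Lemma rprod_recr n F : rprod (S n) F = rprod n F * F n.
Proof.
  unfold rprod. rewrite seq_S, map_app, fold_right_app. simpl.
  generalize (map F (seq 0 n)). induction l; simpl; [ring | rewrite IHl; ring].
Qed.

Lemma rprod_recl n F : rprod (S n) F = F 0%nat * rprod n (fun i => F (S i)).
Proof. unfold rprod. simpl. f_equal. rewrite <- seq_shift, map_map. reflexivity. Qed.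

Lemma rprod_ext n F G : (forall i, (i < n)%nat -> F i = G i) -> rprod n F = rprod n G.
Proof.
  induction n as [|n IH]; intros E; [reflexivity|].
  rewrite !rprod_recr, IH, E by (try lia; intros; apply E; lia). reflexivity.
Qed.

Lemma rprod_nonneg n F : (forall i, (i < n)%nat -> 0 <= F i) -> 0 <= rprod n F.
Proof.
  induction n as [|n IH]; intros Hpos; [unfold rprod; simpl; lra|].
  rewrite rprod_recr. apply Rmult_le_pos; [apply IH; intros; apply Hpos|apply Hpos]; lia.
Qed.

Lemma rprod_pos n F : (forall i, (i < n)%nat -> 0 < F i) -> 0 < rprod n F.
Proof.
  induction n as [|n IH]; intros Hpos; [unfold rprod; simpl; lra|].
  rewrite rprod_recr. apply Rmult_lt_0_compat; [apply IH; intros; apply Hpos|apply Hpos]; lia.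
Qed.

Lemma rprod_le n F G : (forall i, (i < n)%nat -> 0 <= F i <= G i) -> rprod n F <= rprod n G.
Proof.
  induction n as [|n IH]; intros Hle; [unfold rprod; simpl; lra|].
  rewrite !rprod_recr. apply Rmult_le_compat.
  - apply rprod_nonneg. intros. apply Hle. lia.
  - apply Hle. lia.
  - apply IH. intros. apply Hle. lia.
  - apply Hle. lia.
Qed.

Lemma rprod_mul n F G : rprod n (fun i => F i * G i) = rprod n F * rprod n G.
Proof. induction n as [|n IH]; [unfold rprod; simpl; ring | rewrite !rprod_recr, IH; ring]. Qed.

Lemma rprod_exp n a : rprod n (fun i => exp (a i)) = exp (rsum n a).
Proof.
  induction n as [|n IH]; [unfold rprod, rsum; simpl; rewrite exp_0; reflexivity|].
  rewrite rprod_recr, rsum_recr, IH, exp_plus. reflexivity.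
Qed.

(** * Orthonormal bases *)

(* A one-sided inverse of a square matrix is two-sided ([mulmx1C]). *)
Module OrthonormalRows.
Import all_boot all_algebra Rstruct.
Import GRing.Theory.
Local Open Scope ring_scope.

Lemma big_ord_rsum (p : nat) (F : nat -> R) : \sum_(j < p) F (nat_of_ord j) = rsum p F.
Proof. elim: p => [|p IH]; [by rewrite big_ord0 | by rewrite big_ord_recr /= IH rsum_recr]. Qed.

Lemma rows_orthonormal (p : nat) (D : nat -> nat -> R) :
  (forall i j, (i < p)%N -> (j < p)%N ->
     rsum p (fun k => D k i * D k j) = if Nat.eqb i j then 1 else 0) ->
  forall i k, (i < p)%N -> (k < p)%N ->
    rsum p (fun j => D i j * D k j) = if Nat.eqb i k then 1 else 0.
Proof.
  move=> HD i k ip kp.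
  pose M : 'M[R]_p := \matrix_(a, b) D a b.
  have kron (a b : 'I_p) : (if Nat.eqb a b then 1 else 0) = (a == b)%:R :> R.
    case: (Nat.eqb_spec a b) => [/val_inj ->|ne]; first by rewrite eqxx.
    by rewrite (introF eqP) // => /(congr1 val).
  have MtM : M^T *m M = 1%:M.
    apply/matrixP => a b; rewrite !mxE -kron -HD // -big_ord_rsum.
    by apply: eq_bigr => j _; rewrite !mxE.
  have := congr1 (fun X : 'M[R]_p => X (Ordinal ip) (Ordinal kp)) (mulmx1C MtM).
  rewrite /= !mxE -(kron (Ordinal ip) (Ordinal kp)) /= -big_ord_rsum => <-.
  by apply: eq_bigr => j _; rewrite !mxE.
Qed.
End OrthonormalRows.

Lemma orthonormal_rows p D : orthonormal p D -> forall i k, (i < p)%nat -> (k < p)%nat ->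
  rsum p (fun j => D i j * D k j) = if Nat.eqb i k then 1 else 0.
Proof.
  intros HD i k Hi Hk. apply OrthonormalRows.rows_orthonormal;
    try (apply (ssrbool.introT ssrnat.ltP); assumption).
  intros a b Ha Hb. apply HD; apply (ssrbool.elimT ssrnat.ltP); assumption.
Qed.

Definition coord (p : nat) (D : nat -> nat -> R) (f : nat -> R) (j : nat) : R :=
  rsum p (fun k => D k j * f k).

Lemma matvec_ext m M u v i : (forall j, (j < m)%nat -> u j = v j) -> matvec m M u i = matvec m M v i.
Proof. intros E. apply rsum_ext. intros. rewrite E; auto. Qed.

Lemma matvec_nonneg m M v i :
  (forall j, (j < m)%nat -> 0 <= M i j) -> (forall j, (j < m)%nat -> 0 <= v j) -> 0 <= matvec m M v i.
Proof. intros HM Hv. apply rsum_nonneg. intros j Hj. apply Rmult_le_pos; auto. Qed.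

Lemma matvec_sub m M u v i : matvec m M (fun j => u j - v j) i = matvec m M u i - matvec m M v i.
Proof. unfold matvec. rewrite <- rsum_sub. apply rsum_ext. intros. ring. Qed.

Section Orthonormal.
Variables (p : nat) (D : nat -> nat -> R).
Hypothesis HD : orthonormal p D.

Lemma sqnorm_matvec_orthonormal v : sqnorm p (matvec p D v) = sqnorm p v.
Proof.
  unfold sqnorm, matvec.
  rewrite (rsum_ext p _ (fun k => rsum p (fun j => rsum p (fun j' => (D k j * v j) * (D k j' * v j')))))
    by (intros; apply rsum_sqr).
  rewrite rsum_exchange.
  rewrite (rsum_ext p _ (fun j => rsum p (fun j' => (v j * v j') * (if Nat.eqb j j' then 1 else 0)))).
  - apply rsum_ext. intros j Hj. rewrite rsum_kronecker by auto. simpl. ring.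
  - intros j Hj. rewrite rsum_exchange. apply rsum_ext. intros j' Hj'.
    rewrite <- HD, <- rsum_scal by auto. apply rsum_ext. intros. ring.
Qed.

Lemma sqnorm_sub_matvec_orthonormal u v :
  sqnorm p (fun k => matvec p D u k - matvec p D v k) = sqnorm p (fun j => u j - v j).
Proof.
  rewrite <- (sqnorm_matvec_orthonormal (fun j => u j - v j)).
  apply rsum_ext. intros. rewrite matvec_sub. reflexivity.
Qed.

Lemma matvec_coord f i : (i < p)%nat -> matvec p D (coord p D f) i = f i.
Proof.
  intros Hi. unfold matvec, coord.
  rewrite (rsum_ext p _ (fun j => rsum p (fun k => D i j * (D k j * f k))))
    by (intros; rewrite <- rsum_scal; reflexivity).
  rewrite rsum_exchange, <- (rsum_kronecker p f i Hi).
  apply rsum_ext. intros k Hk. rewrite <- (orthonormal_rows p D HD i k Hi Hk), <- rsum_scal.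
  apply rsum_ext. intros. ring.
Qed.

Lemma orthonormal_entry_le1 k j : (k < p)%nat -> (j < p)%nat -> Rabs (D k j) <= 1.
Proof.
  intros Hk Hj.
  assert (Hsq : D k j * D k j <= 1).
  { specialize (HD j j Hj Hj) as Hjj. rewrite Nat.eqb_refl in Hjj. rewrite <- Hjj.
    apply (rsum_term_le p (fun k' => D k' j * D k' j)); [intros; nra | auto]. }
  rewrite <- (Rabs_right (D k j * D k j)), Rabs_mult in Hsq by nra.
  pose proof (Rabs_pos (D k j)). nra.
Qed.

Hypothesis HD0 : first_col_const p D.
Hypothesis Hp : (1 <= p)%nat.

Lemma rsum_matvec_first_col v : rsum p (fun k => matvec p D v k) = sqrt (INR p) * v 0%nat.
Proof.
  unfold matvec. rewrite rsum_exchange.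
  assert (Hs : 0 < sqrt (INR p)) by (apply sqrt_lt_R0, lt_0_INR; lia).
  rewrite (rsum_ext p _ (fun j => (sqrt (INR p) * v j) * (if Nat.eqb 0 j then 1 else 0))).
  - apply rsum_kronecker. lia.
  - intros j Hj. rewrite <- HD, <- rsum_scal by lia. apply rsum_ext. intros k Hk.
    rewrite HD0 by auto. field. lra.
Qed.

Lemma coord_first_col f : rsum p f = 1 -> coord p D f 0 = / sqrt (INR p).
Proof.
  intros Hf. unfold coord.
  rewrite (rsum_ext _ _ (fun k => / sqrt (INR p) * f k)) by (intros; rewrite HD0; auto).
  rewrite rsum_scal, Hf. ring.
Qed.
End Orthonormal.

Lemma Rabs_le_inv x y : Rabs x <= y -> - y <= x <= y.
Proof. intros. pose proof (Rle_abs x). pose proof (Rle_abs (- x)). rewrite Rabs_Ropp in *. lra. Qed.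

Lemma ln_le x y : 0 < x -> x <= y -> ln x <= ln y.
Proof. intros Hx [Hlt|<-]; [left; apply ln_increasing; auto | lra]. Qed.

Lemma exp_le x y : x <= y -> exp x <= exp y.
Proof. intros [Hlt|<-]; [left; apply exp_increasing; auto | lra]. Qed.

Lemma ln_2_bounds : 0 < ln 2 < 1.
Proof.
  split; [rewrite <- ln_1; apply ln_increasing; lra|].
  rewrite <- (ln_exp 1). apply ln_increasing; [lra|]. pose proof (exp_ineq1 1). lra.
Qed.

Definition l1norm (p : nat) (x : nat -> R) : R := rsum p (fun j => Rabs (x j)).

Lemma l1norm_nonneg p x : 0 <= l1norm p x.
Proof. apply rsum_nonneg. intros. apply Rabs_pos. Qed.

Lemma l1norm_sub_sym p a b : l1norm p (fun j => a j - b j) = l1norm p (fun j => b j - a j).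
Proof. apply rsum_ext. intros. apply Rabs_minus_sym. Qed.

Lemma l1norm_sub_triangle p a b c :
  l1norm p (fun j => a j - c j) <= l1norm p (fun j => a j - b j) + l1norm p (fun j => b j - c j).
Proof.
  unfold l1norm. rewrite <- rsum_add. apply rsum_le. intros.
  replace (a i - c i) with ((a i - b i) + (b i - c i)) by ring. apply Rabs_triang.
Qed.

Lemma sqnorm_nonneg p x : 0 <= sqnorm p x.
Proof. apply rsum_nonneg. intros. apply pow2_ge_0. Qed.

Lemma sqnorm_le_sqr_l1norm p x : sqnorm p x <= (l1norm p x)^2.
Proof.
  unfold sqnorm, l1norm. induction p as [|p IH]; [unfold rsum; simpl; lra|].
  rewrite !rsum_recr.
  assert (0 <= rsum p (fun j => Rabs (x j))) by (apply rsum_nonneg; intros; apply Rabs_pos).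
  rewrite <- (pow2_abs (x p)). pose proof (Rabs_pos (x p)). nra.
Qed.

Lemma sqnorm_sub_triangle p a b c :
  sqnorm p (fun j => a j - c j) <= 2 * sqnorm p (fun j => a j - b j) + 2 * sqnorm p (fun j => b j - c j).
Proof.
  unfold sqnorm. rewrite <- !rsum_scal, <- rsum_add. apply rsum_le. intros.
  pose proof (pow2_ge_0 ((a i - b i) - (b i - c i))). simpl in *. nra.
Qed.

Lemma lsum_seq_le_count_nz len lo F x B :
  (forall i, (lo <= i < lo + len)%nat -> 0 <= F i <= B) ->
  (forall i, (lo <= i < lo + len)%nat -> x i = 0 -> F i = 0) ->
  lsum F (seq lo len) <= INR (count_nz lo len x) * B.
Proof.
  revert lo. induction len as [|len IH]; intros lo Hbound Hzero; [unfold lsum, count_nz; simpl; lra|].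
  assert (IHlo := IH (S lo) ltac:(intros; apply Hbound; lia) ltac:(intros; apply Hzero; [lia|auto])).
  unfold count_nz, lsum in *. simpl. destruct (Req_EM_T (x lo) 0) as [E|E].
  - rewrite Hzero by (auto; lia). lra.
  - simpl length. rewrite S_INR. assert (0 <= F lo <= B) by (apply Hbound; lia). lra.
Qed.

Lemma l0_le_length p v (L : list nat) :
  (forall i, (i < p)%nat -> v i <> 0 -> In i L) -> (l0 p v <= length L)%nat.
Proof.
  intros Hsupp. apply NoDup_incl_length; [apply NoDup_filter, seq_NoDup|].
  intros i Hi. apply filter_In in Hi as [Hi Hnz]. apply in_seq in Hi. apply Hsupp; [lia|].
  destruct (Req_EM_T (v i) 0); congruence.
Qed.

(** * The sensing matrix *)

Section Sensing.
Variables (a_l a_u : R) (n p : nat) (At A : nat -> nat -> R).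
Hypothesis Hal : a_l < a_u.
Hypothesis Hn : (1 <= n)%nat.
Hypothesis HAt : forall i j, (i < n)%nat -> (j < p)%nat ->
  a_l / sqrt (INR n) <= At i j <= a_u / sqrt (INR n).
Hypothesis HA : forall i j, (i < n)%nat -> (j < p)%nat ->
  A i j = (At i j + (a_u - 2 * a_l) / sqrt (INR n)) / (2 * (a_u - a_l) * sqrt (INR n)).

Lemma INR_n_pos : 0 < INR n.
Proof. apply lt_0_INR. lia. Qed.

Lemma sensing_entry_bounds i j : (i < n)%nat -> (j < p)%nat -> / (2 * INR n) <= A i j <= / INR n.
Proof.
  intros Hi Hj. pose proof INR_n_pos as Hn0.
  set (sn := sqrt (INR n)).
  assert (Hsn : 0 < sn) by (apply sqrt_lt_R0; auto).
  assert (Hss : sn * sn = INR n) by (apply sqrt_sqrt; lra).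
  set (t := At i j * sn).
  assert (Ht : a_l <= t <= a_u).
  { destruct (HAt i j Hi Hj) as [h1 h2]. fold sn in h1, h2.
    apply (Rmult_le_compat_r sn) in h1, h2; try lra.
    unfold t. unfold Rdiv in h1, h2. rewrite Rmult_assoc, Rinv_l, Rmult_1_r in h1, h2 by lra. lra. }
  assert (E : A i j = (t + a_u - 2 * a_l) / (2 * (a_u - a_l)) * / INR n).
  { rewrite HA by auto. fold sn. rewrite <- Hss. unfold t. field. split; lra. }
  rewrite E, Rinv_mult.
  assert (/ 2 <= (t + a_u - 2 * a_l) / (2 * (a_u - a_l)) <= 1).
  { split; apply (Rmult_le_reg_r (2 * (a_u - a_l))); try lra;
      unfold Rdiv; rewrite ?Rmult_assoc, Rinv_l by lra; lra. }
  assert (0 < / INR n) by (apply Rinv_0_lt_compat; auto). nra.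
Qed.

Lemma sensing_entry_nonneg i j : (i < n)%nat -> (j < p)%nat -> 0 <= A i j.
Proof.
  intros Hi Hj. pose proof INR_n_pos. pose proof (sensing_entry_bounds i j Hi Hj).
  assert (0 < / (2 * INR n)) by (apply Rinv_0_lt_compat; lra). lra.
Qed.

Lemma matvec_sensing_zero_sum x i : (i < n)%nat -> rsum p x = 0 ->
  matvec p A x i = matvec p At x i / (2 * (a_u - a_l) * sqrt (INR n)).
Proof.
  intros Hi Hx. pose proof INR_n_pos.
  assert (Hsn : 0 < sqrt (INR n)) by (apply sqrt_lt_R0; auto).
  unfold matvec.
  rewrite (rsum_ext p _ (fun j => / (2 * (a_u - a_l) * sqrt (INR n)) * (At i j * x j)
       + ((a_u - 2 * a_l) / sqrt (INR n) / (2 * (a_u - a_l) * sqrt (INR n))) * x j)).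
  - rewrite rsum_add, !rsum_scal, Hx. field. split; lra.
  - intros j Hj. rewrite HA by auto. field. split; lra.
Qed.

Lemma matvec_sensing_simplex_bounds g i : (i < n)%nat ->
  (forall j, (j < p)%nat -> 0 <= g j) -> rsum p g = 1 ->
  / (2 * INR n) <= matvec p A g i <= / INR n.
Proof.
  intros Hi Hg Hs. unfold matvec.
  rewrite <- (Rmult_1_r (/ (2 * INR n))), <- (Rmult_1_r (/ INR n)), <- Hs, <- !rsum_scal.
  split; apply rsum_le; intros j Hj;
    apply Rmult_le_compat_r; auto; apply sensing_entry_bounds; auto.
Qed.

Lemma Rabs_matvec_sensing_le y i : (i < n)%nat -> Rabs (matvec p A y i) <= / INR n * l1norm p y.
Proof.
  intros Hi. unfold matvec, l1norm. eapply Rle_trans; [apply rsum_abs_le|].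
  rewrite <- rsum_scal. apply rsum_le. intros j Hj. rewrite Rabs_mult.
  apply Rmult_le_compat_r; [apply Rabs_pos|].
  pose proof (sensing_entry_bounds i j Hi Hj). pose proof INR_n_pos.
  assert (0 < / (2 * INR n)) by (apply Rinv_0_lt_compat; lra).
  rewrite Rabs_right by lra. lra.
Qed.

Lemma l1norm_matvec_sensing_le y : l1norm n (matvec p A y) <= l1norm p y.
Proof.
  unfold matvec, l1norm.
  apply Rle_trans with (rsum n (fun i => rsum p (fun j => Rabs (y j) * A i j))).
  - apply rsum_le. intros i Hi. eapply Rle_trans; [apply rsum_abs_le|]. apply rsum_le.
    intros j Hj. pose proof (sensing_entry_bounds i j Hi Hj). pose proof INR_n_pos.
    assert (0 < / (2 * INR n)) by (apply Rinv_0_lt_compat; lra).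
    rewrite Rabs_mult, (Rabs_right (A i j)) by lra. lra.
  - rewrite rsum_exchange. apply rsum_le. intros j Hj. rewrite rsum_scal.
    assert (rsum n (fun i => A i j) <= 1).
    { apply Rle_trans with (rsum n (fun _ => / INR n)).
      - apply rsum_le. intros. apply sensing_entry_bounds; auto.
      - rewrite rsum_const. pose proof INR_n_pos. right. field. lra. }
    pose proof (Rabs_pos (y j)). nra.
Qed.

Lemma matvec_sensing_near_simplex (x g : nat -> R) i : (i < n)%nat ->
  (forall j, (j < p)%nat -> 0 <= g j) -> rsum p g = 1 ->
  l1norm p (fun j => x j - g j) <= / 4 ->
  / (4 * INR n) <= matvec p A x i <= 5 / (4 * INR n).
Proof.
  intros Hi Hg1 Hg2 Hl.
  pose proof (matvec_sensing_simplex_bounds g i Hi Hg1 Hg2) as Hg.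
  pose proof (Rabs_matvec_sensing_le (fun j => x j - g j) i Hi) as Hd.
  rewrite matvec_sub in Hd. apply Rabs_le_inv in Hd.
  pose proof INR_n_pos.
  assert (0 < / INR n) by (apply Rinv_0_lt_compat; lra).
  assert (/ INR n * l1norm p (fun j => x j - g j) <= / INR n * / 4) by (apply Rmult_le_compat_l; lra).
  replace (/ (4 * INR n)) with (/ INR n * / 4) by (field; lra).
  replace (5 / (4 * INR n)) with (/ INR n * / 4 * 5) by (field; lra).
  replace (/ (2 * INR n)) with (/ INR n * / 2) in Hg by (field; lra).
  lra.
Qed.
End Sensing.

(** * Expectations under independent Poisson observations *)

Lemma rsum_sum_f_R0 N F : rsum (S N) F = sum_f_R0 F N.
Proof. induction N as [|N IH]; [unfold rsum; simpl; ring | rewrite rsum_recr, IH; reflexivity]. Qed.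

Lemma exp_partial_sum_le x N : 0 <= x -> rsum (S N) (fun k => x ^ k / INR (fact k)) <= exp x.
Proof.
  intros Hx.
  assert (Hcv : Un_cv (fun M => sum_f_R0 (fun i => / INR (fact i) * x ^ i) M) (exp x)).
  { unfold exp. destruct (exist_exp x) as [l Hl]. exact Hl. }
  rewrite rsum_sum_f_R0.
  replace (sum_f_R0 (fun k => x ^ k / INR (fact k)) N) with (sum_f_R0 (fun i => / INR (fact i) * x ^ i) N)
    by (apply sum_eq; intros; unfold Rdiv; ring).
  apply growing_ineq; auto. intro M. rewrite tech5.
  assert (0 < / INR (fact (S M))) by (apply Rinv_0_lt_compat, INR_fact_lt_0).
  pose proof (pow_le x (S M) Hx). nra.
Qed.

Lemma poisson_pmf_nonneg lam k : 0 <= lam -> 0 <= poisson_pmf lam k.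
Proof.
  intros. unfold poisson_pmf, Rdiv. pose proof (exp_pos (- lam)). pose proof (pow_le lam k H).
  assert (0 < / INR (fact k)) by (apply Rinv_0_lt_compat, INR_fact_lt_0).
  apply Rmult_le_pos; [apply Rmult_le_pos|]; lra.
Qed.

Lemma poisson_pmf_pos lam k : 0 < lam -> 0 < poisson_pmf lam k.
Proof.
  intros. unfold poisson_pmf, Rdiv. repeat apply Rmult_lt_0_compat.
  - apply exp_pos.
  - apply pow_lt; auto.
  - apply Rinv_0_lt_compat, INR_fact_lt_0.
Qed.

Lemma rsum_poisson_exp_pow_le lam r a N : 0 <= lam -> 0 <= r ->
  rsum (S N) (fun k => poisson_pmf lam k * (exp a * r ^ k)) <= exp (a - lam + lam * r).
Proof.
  intros Hl Hr.
  rewrite (rsum_ext _ _ (fun k => exp a * exp (- lam) * ((lam * r) ^ k / INR (fact k))))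
    by (intros; unfold poisson_pmf; rewrite Rpow_mult_distr; unfold Rdiv; ring).
  rewrite rsum_scal. replace (a - lam + lam * r) with (a + - lam + lam * r) by ring.
  rewrite !exp_plus. apply Rmult_le_compat_l.
  - pose proof (exp_pos a). pose proof (exp_pos (- lam)). nra.
  - apply exp_partial_sum_le. nra.
Qed.

Lemma In_box_length n N y : In y (box n N) -> length y = n.
Proof.
  revert y. induction n as [|n IH]; intros y Hy.
  - destruct Hy as [<-|[]]. reflexivity.
  - change (In y (flat_map (fun k => map (cons k) (box n N)) (seq 0 (S N)))) in Hy.
    apply in_flat_map in Hy as [k [_ Hk]]. apply in_map_iff in Hk as [y' [<- Hy']].
    simpl. f_equal. auto.
Qed.

Lemma lsum_box_rprod n N (h : nat -> nat -> R) :
  lsum (fun y => rprod n (fun i => h i (nth i y 0%nat))) (box n N) = rprod n (fun i => rsum (S N) (h i)).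
Proof.
  revert h. induction n as [|n IH]; intros h; [unfold lsum, rprod; simpl; ring|].
  change (box (S n) N) with (flat_map (fun k => map (cons k) (box n N)) (seq 0 (S N))).
  rewrite lsum_flat_map, rprod_recl, rsum_lsum, Rmult_comm, <- lsum_scal.
  apply lsum_ext. intros k _. rewrite lsum_map.
  rewrite (lsum_ext _ (fun y => h 0%nat k * rprod n (fun i => h (S i) (nth i y 0%nat))))
    by (intros; apply rprod_recl).
  rewrite lsum_scal, (IH (fun i => h (S i))). ring.
Qed.

Lemma joint_pmf_nonneg lam y : (forall i, (i < length y)%nat -> 0 <= lam i) -> 0 <= joint_pmf lam y.
Proof. intros. apply rprod_nonneg. intros. apply poisson_pmf_nonneg; auto. Qed.

Section BoxExpect.
Variables (n N : nat) (lam : nat -> R).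

Lemma box_expect_ext g1 g2 :
  (forall y, In y (box n N) -> g1 y = g2 y) -> box_expect n N lam g1 = box_expect n N lam g2.
Proof. intros E. apply lsum_ext. intros y Hy. rewrite E; auto. Qed.

Lemma box_expect_add g1 g2 :
  box_expect n N lam (fun y => g1 y + g2 y) = box_expect n N lam g1 + box_expect n N lam g2.
Proof.
  unfold box_expect. fold (lsum (fun y => joint_pmf lam y * (g1 y + g2 y)) (box n N)).
  rewrite (lsum_ext _ (fun y => joint_pmf lam y * g1 y + joint_pmf lam y * g2 y)) by (intros; ring).
  apply lsum_add.
Qed.

Lemma box_expect_scal c g : box_expect n N lam (fun y => c * g y) = c * box_expect n N lam g.
Proof.
  unfold box_expect. fold (lsum (fun y => joint_pmf lam y * (c * g y)) (box n N)).
  rewrite (lsum_ext _ (fun y => c * (joint_pmf lam y * g y))) by (intros; ring).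
  apply lsum_scal.
Qed.

Lemma box_expect_lsum {A} (G : A -> list nat -> R) l :
  box_expect n N lam (fun y => lsum (fun u => G u y) l) = lsum (fun u => box_expect n N lam (G u)) l.
Proof.
  induction l as [|a l IH].
  - unfold box_expect, lsum; simpl. induction (box n N) as [|y ys IHy]; simpl; [|rewrite IHy]; ring.
  - change (box_expect n N lam (fun y => G a y + lsum (fun u => G u y) l) =
            box_expect n N lam (G a) + lsum (fun u => box_expect n N lam (G u)) l).
    rewrite box_expect_add, IH. reflexivity.
Qed.

Hypothesis Hlam : forall i, (i < n)%nat -> 0 <= lam i.

Lemma box_expect_le g1 g2 :
  (forall y, In y (box n N) -> g1 y <= g2 y) -> box_expect n N lam g1 <= box_expect n N lam g2.
Proof.
  intros Hle. apply lsum_le. intros y Hy. apply Rmult_le_compat_l; auto.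
  apply joint_pmf_nonneg. rewrite (In_box_length n N y Hy). auto.
Qed.

Lemma box_expect_rprod_le (a r : nat -> R) : (forall i, (i < n)%nat -> 0 <= r i) ->
  box_expect n N lam (fun y => rprod n (fun i => exp (a i) * r i ^ (nth i y 0%nat)))
  <= exp (rsum n (fun i => a i - lam i + lam i * r i)).
Proof.
  intros Hr. unfold box_expect.
  fold (lsum (fun y => joint_pmf lam y * rprod n (fun i => exp (a i) * r i ^ (nth i y 0%nat))) (box n N)).
  pose proof (lsum_box_rprod n N (fun i k => poisson_pmf (lam i) k * (exp (a i) * r i ^ k))) as Hbox.
  cbv beta in Hbox.
  rewrite (lsum_ext _ (fun y => rprod n (fun i =>
             poisson_pmf (lam i) (nth i y 0%nat) * (exp (a i) * r i ^ (nth i y 0%nat))))).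
  - rewrite Hbox, <- rprod_exp. apply rprod_le. intros i Hi. split.
    + apply rsum_nonneg. intros k _. apply Rmult_le_pos; [apply poisson_pmf_nonneg; auto|].
      pose proof (exp_pos (a i)). pose proof (pow_le (r i) k (Hr i Hi)). nra.
    + apply rsum_poisson_exp_pow_le; auto.
  - intros y Hy. unfold joint_pmf. rewrite (In_box_length n N y Hy), <- rprod_mul. reflexivity.
Qed.

Lemma box_expect_const_le c : 0 <= c -> box_expect n N lam (fun _ => c) <= c.
Proof.
  intros Hc.
  rewrite (box_expect_ext _ (fun y => c * rprod n (fun i => exp 0 * 1 ^ (nth i y 0%nat)))).
  - rewrite box_expect_scal. rewrite <- (Rmult_1_r c) at 2. apply Rmult_le_compat_l; auto.
    eapply Rle_trans; [apply (box_expect_rprod_le (fun _ => 0) (fun _ => 1)); intros; lra|].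
    rewrite (rsum_ext _ _ (fun _ => 0)) by (intros; ring).
    rewrite rsum_const, Rmult_0_r, exp_0. lra.
  - intros y _. rewrite (rprod_ext _ _ (fun _ => exp 0)) by (intros; rewrite pow1; ring).
    rewrite rprod_exp, rsum_const, Rmult_0_r, exp_0. ring.
Qed.
End BoxExpect.

(* Bhattacharyya-type bound for one Poisson coordinate: [mu] is the intensity of a
   competitor, [nu] that of the reference net point, [lam] the true intensity. *)
Lemma bhattacharyya_exponent_le lam nu mu B :
  0 < nu -> 0 < mu -> nu <= B -> mu <= B -> mu <= 5 * nu ->
  - (mu - nu) / 2 - lam + lam * (sqrt mu / sqrt nu) <= - ((mu - nu) ^ 2 / (8 * B)) + 2 * Rabs (lam - nu).
Proof.
  intros Hnu Hmu HnB HmB H5.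
  set (a := sqrt mu). set (b := sqrt nu).
  assert (Ha : 0 < a) by (apply sqrt_lt_R0; auto).
  assert (Hb : 0 < b) by (apply sqrt_lt_R0; auto).
  assert (Ha2 : a * a = mu) by (apply sqrt_sqrt; lra).
  assert (Hb2 : b * b = nu) by (apply sqrt_sqrt; lra).
  set (r := a / b).
  assert (Har : a = r * b) by (unfold r; field; lra).
  assert (Hr0 : 0 <= r) by (unfold r; apply Rle_mult_inv_pos; lra).
  assert (Hr3 : r <= 3).
  { destruct (Rle_dec r 3) as [|Hr]; auto. exfalso.
    assert (r * r > 9) by nra.
    assert (mu = r * r * nu) by (rewrite <- Ha2, <- Hb2, Har; ring). nra. }
  set (d := lam - nu).
  assert (E : - (mu - nu) / 2 - lam + lam * r = - (a - b) ^ 2 / 2 + d * (r - 1))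
    by (unfold d; rewrite <- Ha2, <- Hb2, Har; field).
  rewrite E.
  assert (Hd : d * (r - 1) <= 2 * Rabs d)
    by (destruct (Rle_dec 0 d); [rewrite Rabs_right | rewrite Rabs_left]; nra).
  assert (Hq : (mu - nu) ^ 2 <= (a - b) ^ 2 * (4 * B)).
  { rewrite <- Ha2, <- Hb2.
    replace ((a * a - b * b) ^ 2) with ((a - b) ^ 2 * (a + b) ^ 2) by ring.
    apply Rmult_le_compat_l; [apply pow2_ge_0|]. pose proof (pow2_ge_0 (a - b)). nra. }
  assert ((mu - nu) ^ 2 / (8 * B) <= (a - b) ^ 2 / 2).
  { apply (Rmult_le_reg_r (8 * B)); [lra|].
    unfold Rdiv. rewrite Rmult_assoc, Rinv_l by lra. lra. }
  unfold Rdiv in *. lra.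
Qed.

Lemma poisson_pmf_likelihood_ratio nu mu k : 0 < nu -> 0 < mu ->
  poisson_pmf nu k * (exp (- (mu - nu) / 2) * (sqrt mu / sqrt nu) ^ k) ^ 2 = poisson_pmf mu k.
Proof.
  intros Hnu Hmu.
  assert (Ha : sqrt mu * sqrt mu = mu) by (apply sqrt_sqrt; lra).
  assert (Hb : sqrt nu * sqrt nu = nu) by (apply sqrt_sqrt; lra).
  assert (Hb0 : 0 < sqrt nu) by (apply sqrt_lt_R0; auto).
  assert (Hsq : sqrt mu / sqrt nu * (sqrt mu / sqrt nu) = mu * / nu)
    by (transitivity ((sqrt mu * sqrt mu) * / (sqrt nu * sqrt nu)); [field | rewrite Ha, Hb]; lra).
  rewrite Rpow_mult_distr, <- pow_mult, (Nat.mul_comm k 2), pow_mult.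
  replace (exp (- (mu - nu) / 2) ^ 2) with (exp (- mu) * exp nu)
    by (simpl; rewrite Rmult_1_r, <- !exp_plus; f_equal; field).
  replace ((sqrt mu / sqrt nu) ^ 2) with (mu * / nu) by (simpl; rewrite Rmult_1_r; auto).
  unfold poisson_pmf. rewrite Rpow_mult_distr, pow_inv.
  assert (exp (- nu) * exp nu = 1) by (rewrite <- exp_plus, Rplus_opp_l; apply exp_0).
  assert (nu ^ k <> 0) by (apply pow_nonzero; lra).
  field_simplify_eq; [|split; [apply INR_fact_neq_0 | auto]].
  transitivity (exp (- mu) * mu ^ k * (exp (- nu) * exp nu)); [ring|]. rewrite H. ring.
Qed.

Lemma nine_le_exp_nine_halves : 9 <= exp (9 / 2).
Proof.
  assert (H1 : 2 <= exp 1) by (pose proof (exp_ineq1_le 1); lra).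
  replace (9 / 2) with (1 + 1 + 1 + 1 + / 2) by field. rewrite !exp_plus.
  assert (1 <= exp (/ 2)) by (pose proof (exp_ineq1_le (/ 2)); lra).
  assert (4 <= exp 1 * exp 1) by nra. assert (16 <= exp 1 * exp 1 * exp 1 * exp 1) by nra. nra.
Qed.

Fixpoint argmax {B : Type} (F : B -> R) (best : B) (l : list B) : B :=
  match l with
  | [] => best
  | u :: l' => argmax F (if Rlt_dec (F best) (F u) then u else best) l'
  end.

Lemma argmax_spec {B} (F : B -> R) best l :
  In (argmax F best l) (best :: l) /\ forall u, In u (best :: l) -> F u <= F (argmax F best l).
Proof.
  revert best. induction l as [|v l IH]; intros best; simpl.
  - split; [auto | intros u [<-|[]]; lra].
  - set (b' := if Rlt_dec (F best) (F v) then v else best).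
    assert (Hb' : F best <= F b' /\ F v <= F b' /\ (b' = best \/ b' = v))
      by (unfold b'; destruct (Rlt_dec (F best) (F v)); repeat split; auto; lra).
    destruct (IH b') as [Hin Hmax]. split.
    + destruct Hin as [<-|Hin]; [destruct Hb' as [_ [_ [-> | ->]]]|]; auto.
    + pose proof (Hmax b' (or_introl eq_refl)).
      intros u [<-|[<-|Hu]]; [lra | lra | apply Hmax; right; auto].
Qed.

Fixpoint tuples {A : Type} (k : nat) (X : list A) : list (list A) :=
  match k with
  | O => [ [] ]
  | S k' => flat_map (fun x => map (cons x) (tuples k' X)) X
  end.

Lemma length_flat_map_const {A B} (f : A -> list B) c l :
  (forall x, length (f x) = c) -> length (flat_map f l) = (length l * c)%nat.
Proof. intros Hf. induction l; simpl; [auto | rewrite length_app, Hf, IHl; auto]. Qed.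

Lemma length_tuples {A} k (X : list A) : length (tuples k X) = (length X ^ k)%nat.
Proof.
  induction k as [|k IH]; [reflexivity|]. simpl tuples.
  rewrite (length_flat_map_const _ (length (tuples k X))), IH by (intros; apply length_map).
  simpl. lia.
Qed.

Lemma In_tuples {A} k (X : list A) L :
  length L = k -> (forall x, In x L -> In x X) -> In L (tuples k X).
Proof.
  revert L. induction k as [|k IH]; intros [|x L] HL HX; simpl in HL; try discriminate.
  - left. auto.
  - simpl tuples. apply in_flat_map. exists x. split; [apply HX; left; auto|].
    apply in_map, IH; [lia | intros; apply HX; right; auto].
Qed.

Lemma In_tuples_length {A} k (X : list A) L : In L (tuples k X) -> length L = k.
Proof.
  revert L. induction k as [|k IH]; intros L HL; simpl in HL.
  - destruct HL as [<-|[]]. auto.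
  - apply in_flat_map in HL as [x [_ HL]]. apply in_map_iff in HL as [L' [<- HL]].
    simpl. f_equal. auto.
Qed.

(* A net point is encoded by a list of pairs [(j, q)], each adding the grid value
   [(q - M) / M] to coordinate [j >= 1]; pairs with [j = 0] are padding.  The coordinate
   along [d_1] is pinned to [1 / sqrt p], its value for every element of the class. *)
Definition decode (p M : nat) (L : list (nat * nat)) (j : nat) : R :=
  if Nat.eqb j 0 then / sqrt (INR p)
  else lsum (fun q => if Nat.eqb (fst q) j then (INR (snd q) - INR M) / INR M else 0) L.

Lemma decode_support p M L j : j <> 0%nat -> decode p M L j <> 0 -> In j (map fst L).
Proof.
  intros Hj. unfold decode. destruct (Nat.eqb_spec j 0) as [|_]; [lia|].
  induction L as [|q L IH]; intros Hnz; [unfold lsum in Hnz; simpl in Hnz; lra|].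
  unfold lsum in Hnz. simpl in Hnz.
  destruct (Nat.eqb_spec (fst q) j); [left; auto | right; apply IH; unfold lsum; lra].
Qed.

Lemma l0_decode_sub_le p M s L L' : length L = s -> length L' = s ->
  (l0 p (fun j => (decode p M L j - decode p M L' j)%R) <= 2 * s)%nat.
Proof.
  intros H1 H2.
  replace (2 * s)%nat with (length (map fst L ++ map fst L')) by (rewrite length_app, !length_map; lia).
  apply l0_le_length. intros i Hi Hne.
  destruct (Nat.eq_dec i 0) as [->|Hi0]; [unfold decode in Hne; simpl in Hne; lra|].
  apply in_or_app. destruct (Req_EM_T (decode p M L i) 0).
  - right. apply (decode_support p M); auto. lra.
  - left. apply (decode_support p M); auto.
Qed.

Definition quantize (M : nat) (x : R) : nat := Z.to_nat (up (x * INR M) - 1 + Z.of_nat M).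

Lemma quantize_spec M x : (1 <= M)%nat -> -1 <= x <= 1 ->
  (quantize M x <= 2 * M)%nat /\ Rabs (x - (INR (quantize M x) - INR M) / INR M) <= / INR M.
Proof.
  intros HM Hx. unfold quantize.
  assert (HMp : 0 < INR M) by (apply lt_0_INR; lia).
  set (z := (up (x * INR M) - 1)%Z).
  destruct (archimed (x * INR M)) as [A1 A2].
  assert (Hz1 : IZR z <= x * INR M) by (unfold z; rewrite minus_IZR; simpl; lra).
  assert (Hz2 : x * INR M < IZR z + 1) by (unfold z; rewrite minus_IZR; simpl; lra).
  assert (Hlo : (- Z.of_nat M <= z)%Z).
  { assert (Hgt : IZR z > IZR (- Z.of_nat M - 1))
      by (rewrite minus_IZR, opp_IZR, <- INR_IZR_INZ; simpl; nra).
    apply Rgt_lt, lt_IZR in Hgt. lia. }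
  assert (Hnat : INR (Z.to_nat (z + Z.of_nat M)) = IZR z + INR M)
    by (rewrite INR_IZR_INZ, Z2Nat.id, plus_IZR, <- INR_IZR_INZ by lia; reflexivity).
  split.
  - apply INR_le. rewrite Hnat, mult_INR. simpl. nra.
  - rewrite Hnat.
    replace (x - (IZR z + INR M - INR M) / INR M) with ((x * INR M - IZR z) / INR M) by (field; lra).
    unfold Rdiv. rewrite Rabs_mult, (Rabs_right (/ INR M)), Rabs_right
      by (try (left; apply Rinv_0_lt_compat); lra).
    assert (0 < / INR M) by (apply Rinv_0_lt_compat; lra). nra.
Qed.

Definition coord_support (p : nat) (D : nat -> nat -> R) (f : nat -> R) : list nat :=
  filter (fun j => if Req_EM_T (coord p D f j) 0 then false else true) (seq 1 (p - 1)).

Definition encode (p M s : nat) (D : nat -> nat -> R) (f : nat -> R) : list (nat * nat) :=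
  map (fun j => (j, quantize M (coord p D f j))) (coord_support p D f)
  ++ repeat (0%nat, 0%nat) (s - length (coord_support p D f)).

Section Encode.
Variables (p M s : nat) (D : nat -> nat -> R) (f : nat -> R).
Hypothesis HD : orthonormal p D.
Hypothesis HD0 : first_col_const p D.
Hypothesis Hp : (1 <= p)%nat.
Hypothesis HM : (1 <= M)%nat.
Hypothesis Hf : in_F p s D f.

Lemma Rabs_coord_le1 j : (j < p)%nat -> Rabs (coord p D f j) <= 1.
Proof.
  intros Hj. destruct Hf as [Hf1 [Hf2 _]]. unfold coord.
  eapply Rle_trans; [apply rsum_abs_le|]. rewrite <- Hf2. apply rsum_le. intros k Hk.
  rewrite Rabs_mult, (Rabs_right (f k)) by (apply Rle_ge; auto).
  pose proof (orthonormal_entry_le1 p D HD k j Hk Hj). pose proof (Hf1 k Hk). nra.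
Qed.

Lemma quantize_coord_spec j : (j < p)%nat ->
  (quantize M (coord p D f j) <= 2 * M)%nat /\
  Rabs (coord p D f j - (INR (quantize M (coord p D f j)) - INR M) / INR M) <= / INR M.
Proof. intros Hj. apply quantize_spec; auto. apply Rabs_le_inv, Rabs_coord_le1; auto. Qed.

Lemma length_encode : length (encode p M s D f) = s.
Proof.
  destruct Hf as [_ [_ Hsupp]]. unfold Dbar_l0, count_nz in Hsupp.
  unfold encode. rewrite length_app, length_map, repeat_length. unfold coord_support, coord. lia.
Qed.

Lemma encode_In_tuples : In (encode p M s D f) (tuples s (list_prod (seq 0 p) (seq 0 (S (2 * M))))).
Proof.
  apply In_tuples; [apply length_encode|]. intros q Hq. apply in_app_or in Hq as [Hq|Hq].
  - apply in_map_iff in Hq as [j [<- Hj]]. apply filter_In in Hj as [Hj _]. apply in_seq in Hj.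
    destruct (quantize_coord_spec j ltac:(lia)) as [Hq _].
    apply in_prod; apply in_seq; lia.
  - apply repeat_spec in Hq. subst. apply in_prod; apply in_seq; lia.
Qed.

Lemma Rabs_coord_sub_decode_le j : (j < p)%nat ->
  Rabs (coord p D f j - decode p M (encode p M s D f) j) <= / INR M.
Proof.
  intros Hj. assert (HMp : 0 < / INR M) by (apply Rinv_0_lt_compat, lt_0_INR; lia).
  unfold decode. destruct (Nat.eqb_spec j 0) as [->|Hj0].
  { rewrite (coord_first_col p D HD0 f) by apply Hf. rewrite Rminus_diag, Rabs_R0. lra. }
  unfold encode. rewrite lsum_app, lsum_map.
  rewrite (lsum_ext (fun q => if Nat.eqb (fst q) j then _ else 0) (fun _ => 0))
    by (intros q Hq; apply repeat_spec in Hq; subst; simpl; destruct j; [lia | reflexivity]).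
  replace (lsum (fun _ => 0) _) with 0 by (induction (s - _)%nat; unfold lsum in *; simpl; lra).
  rewrite Rplus_0_r. simpl.
  rewrite (lsum_select_NoDup (coord_support p D f) j
             (fun j' => (INR (quantize M (coord p D f j')) - INR M) / INR M))
    by apply NoDup_filter, seq_NoDup.
  destruct (in_dec Nat.eq_dec j (coord_support p D f)) as [Hin|Hnin].
  - apply quantize_coord_spec; auto.
  - assert (Hz : coord p D f j = 0).
    { destruct (Req_EM_T (coord p D f j) 0) as [|Hne]; auto. exfalso. apply Hnin, filter_In.
      split; [apply in_seq; lia | destruct (Req_EM_T (coord p D f j) 0); tauto]. }
    rewrite Hz, Rminus_0_r, Rabs_R0. lra.
Qed.

Lemma l1norm_sub_decode_le :
  l1norm p (fun k => f k - matvec p D (decode p M (encode p M s D f)) k) <= INR p * INR p / INR M.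
Proof.
  unfold l1norm. replace (INR p * INR p / INR M) with (rsum p (fun _ => INR p / INR M))
    by (rewrite rsum_const; unfold Rdiv; ring).
  apply rsum_le. intros k Hk. rewrite <- (matvec_coord p D HD f k Hk), <- matvec_sub.
  unfold matvec. eapply Rle_trans; [apply rsum_abs_le|].
  replace (INR p / INR M) with (rsum p (fun _ => / INR M)) by (rewrite rsum_const; unfold Rdiv; ring).
  apply rsum_le. intros j Hj. rewrite Rabs_mult.
  pose proof (orthonormal_entry_le1 p D HD k j Hk Hj). pose proof (Rabs_coord_sub_decode_le j Hj).
  pose proof (Rabs_pos (D k j)). pose proof (Rabs_pos (coord p D f j - decode p M (encode p M s D f) j)).
  nra.
Qed.
End Encode.

(** * The maximum likelihood estimator on a net *)

Definition minimax_rate (p s : nat) (T delta : R) : R :=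
  INR s * log2 (INR p) / ((1 - delta) * T) + INR s * log2 (T + 1) / ((1 - delta) * T).

Lemma l1norm_sub_in_F_le2 p s D f g : in_F p s D f -> in_F p s D g -> l1norm p (fun j => f j - g j) <= 2.
Proof.
  intros [Hf1 [Hf2 _]] [Hg1 [Hg2 _]]. unfold l1norm.
  apply Rle_trans with (rsum p (fun j => f j + g j)).
  - apply rsum_le. intros j Hj. pose proof (Hf1 j Hj). pose proof (Hg1 j Hj). apply Rabs_le. lra.
  - rewrite rsum_add, Hf2, Hg2. lra.
Qed.

Section NetMLE.
Variables (a_l a_u : R) (n p s : nat) (T delta : R) (D At A : nat -> nat -> R) (M : nat).
Hypothesis Hal : a_l < a_u.
Hypothesis Hn : (1 <= n)%nat.
Hypothesis Hp : (1 <= p)%nat.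
Hypothesis HT : 1 <= T.
Hypothesis HD : orthonormal p D.
Hypothesis HD0 : first_col_const p D.
Hypothesis HAt : forall i j, (i < n)%nat -> (j < p)%nat ->
  a_l / sqrt (INR n) <= At i j <= a_u / sqrt (INR n).
Hypothesis HA : forall i j, (i < n)%nat -> (j < p)%nat ->
  A i j = (At i j + (a_u - 2 * a_l) / sqrt (INR n)) / (2 * (a_u - a_l) * sqrt (INR n)).
Hypothesis Hdelta : 0 <= delta < 1.
Hypothesis HRIP : forall u : nat -> R, (l0 p u <= 2 * s)%nat ->
  (1 - delta) * sqnorm p u <= sqnorm n (matvec p At (matvec p D u)).
Hypothesis HM : (1 <= M)%nat.
Hypothesis HMT : INR p * INR p / INR M <= / (4 * (T + 1)).

Definition grid := list_prod (seq 0 p) (seq 0 (S (2 * M))).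

Definition near_class (u : nat -> R) : Prop :=
  exists g, in_F p s D g /\ l1norm p (fun j => matvec p D u j - g j) <= / 4.

(* Net points whose signal is far from the class are discarded (a non-constructive test),
   so that all retained intensities are comparable to [T / n]. *)
Definition net : list (nat -> R) :=
  filter (fun u => if excluded_middle_informative (near_class u) then true else false)
    (map (decode p M) (tuples s grid)).

Definition intensity (u : nat -> R) (i : nat) : R := T * matvec p A (matvec p D u) i.

Definition likelihood (u : nat -> R) (y : list nat) : R := joint_pmf (intensity u) y.

Definition mle (y : list nat) : nat -> R :=
  argmax (fun u => likelihood u y) (hd (fun _ => 0) net) net.

Definition mle_estimate (y : list nat) : nat -> R := matvec p D (mle y).

Definition kappa := 2 * (a_u - a_l).

(* [1 / (8 B)] times [T^2 / (kappa^2 n)], for the intensity bound [B = 5 T / (4 n)]. *)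
Definition rate_const := / (10 * kappa ^ 2).

(* Chosen so that [9 |net| exp (1/2 - rate_const T (1 - delta) radius) <= 1 / T],
   since [9 <= exp (9/2)]. *)
Definition radius := (ln (INR (length net)) + ln T + 5) / (rate_const * T * (1 - delta)).

Lemma rate_const_pos : 0 < rate_const.
Proof. unfold rate_const, kappa. apply Rinv_0_lt_compat, Rmult_lt_0_compat; [|apply pow_lt]; lra. Qed.

Lemma In_net u : In u net -> near_class u /\ exists L, In L (tuples s grid) /\ u = decode p M L.
Proof.
  unfold net. intros Hu. apply filter_In in Hu as [Hu Hnear]. split.
  - destruct (excluded_middle_informative (near_class u)); [auto | discriminate].
  - apply in_map_iff in Hu as [L [<- HL]]. eauto.
Qed.

Lemma T_div_4n_pos : 0 < T / (4 * INR n).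
Proof. pose proof (INR_n_pos n Hn). apply Rdiv_lt_0_compat; lra. Qed.

Lemma intensity_bounds u i : near_class u -> (i < n)%nat ->
  T / (4 * INR n) <= intensity u i <= 5 * (T / (4 * INR n)).
Proof.
  intros [g [[Hg1 [Hg2 _]] Hl]] Hi. unfold intensity.
  destruct (matvec_sensing_near_simplex a_l a_u n p At A Hal Hn HAt HA (matvec p D u) g i Hi Hg1 Hg2 Hl).
  unfold Rdiv in *. split; [|rewrite <- Rmult_assoc, (Rmult_comm 5 T), Rmult_assoc];
    apply Rmult_le_compat_l; lra.
Qed.

Lemma rsum_signal_sub_zero u v : In u net -> In v net ->
  rsum p (fun k => matvec p D u k - matvec p D v k) = 0.
Proof.
  intros Hu Hv. destruct (In_net u Hu) as [_ [L [_ ->]]]. destruct (In_net v Hv) as [_ [L' [_ ->]]].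
  rewrite rsum_sub, !(rsum_matvec_first_col p D HD HD0 Hp). unfold decode. simpl. ring.
Qed.

(* Net points share their [d_1]-coordinate, so their signals differ by a zero-sum vector, on
   which [A] acts as [At / (kappa sqrt n)]; Assumption 3 then separates the intensities. *)
Lemma intensity_gap_lower u v : In u net -> In v net ->
  T ^ 2 * (1 - delta) * sqnorm p (fun j => u j - v j) / (kappa ^ 2 * INR n)
  <= sqnorm n (fun i => intensity u i - intensity v i).
Proof.
  intros Hu Hv. pose proof (INR_n_pos n Hn) as Hn0.
  assert (Hsn : 0 < sqrt (INR n)) by (apply sqrt_lt_R0; auto).
  assert (Hk : 0 < kappa) by (unfold kappa; lra).
  unfold sqnorm at 2.
  rewrite (rsum_ext n _ (fun i => (T ^ 2 / (kappa ^ 2 * INR n))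
                                  * (matvec p At (matvec p D (fun j => u j - v j)) i) ^ 2)).
  - rewrite rsum_scal. fold (sqnorm n (matvec p At (matvec p D (fun j => u j - v j)))).
    destruct (In_net u Hu) as [_ [L [HL ->]]]. destruct (In_net v Hv) as [_ [L' [HL' ->]]].
    pose proof (HRIP _ (l0_decode_sub_le p M s L L' (In_tuples_length s grid L HL)
                                                  (In_tuples_length s grid L' HL'))).
    assert (0 < T ^ 2 / (kappa ^ 2 * INR n)).
    { apply Rdiv_lt_0_compat; [apply pow_lt; lra | apply Rmult_lt_0_compat; [apply pow_lt|]; lra]. }
    set (du := sqnorm p (fun j => decode p M L j - decode p M L' j)) in *.
    replace (T ^ 2 * (1 - delta) * du / (kappa ^ 2 * INR n))
      with (T ^ 2 / (kappa ^ 2 * INR n) * ((1 - delta) * du)) by (field; split; lra).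
    apply Rmult_le_compat_l; lra.
  - intros i Hi. unfold intensity. rewrite <- Rmult_minus_distr_l, <- matvec_sub.
    rewrite (matvec_sensing_zero_sum a_l a_u n p At A Hal Hn HA)
      by (auto; apply rsum_signal_sub_zero; auto).
    rewrite (matvec_ext p At _ (matvec p D (fun j => u j - v j))) by (intros; symmetry; apply matvec_sub).
    unfold kappa. replace (INR n) with (sqrt (INR n) * sqrt (INR n)) at 2 by (apply sqrt_sqrt; lra).
    field. split; lra.
Qed.

Section TrueSignal.
Variable f : nat -> R.
Hypothesis Hf : in_F p s D f.

Definition u0 := decode p M (encode p M s D f).

Definition true_intensity (i : nat) := T * matvec p A f i.

Lemma l1norm_signal_u0_sub_le : l1norm p (fun j => matvec p D u0 j - f j) <= / (4 * (T + 1)).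
Proof.
  rewrite l1norm_sub_sym. eapply Rle_trans; [|apply HMT].
  apply (l1norm_sub_decode_le p M s D f HD HD0 Hp HM Hf).
Qed.

Lemma l1norm_signal_u0_sub_le_quarter : l1norm p (fun j => matvec p D u0 j - f j) <= / 4.
Proof. eapply Rle_trans; [apply l1norm_signal_u0_sub_le | apply Rinv_le_contravar; lra]. Qed.

Lemma near_class_u0 : near_class u0.
Proof. exists f. split; [auto | apply l1norm_signal_u0_sub_le_quarter]. Qed.

Lemma u0_In_net : In u0 net.
Proof.
  unfold net. apply filter_In. split.
  - apply in_map, encode_In_tuples; auto.
  - destruct (excluded_middle_informative (near_class u0)) as [|Hnot]; [auto|].
    destruct (Hnot near_class_u0).
Qed.

Lemma sqrt_intensity_u0_pos i : (i < n)%nat -> 0 < sqrt (intensity u0 i).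
Proof.
  intros Hi. pose proof T_div_4n_pos. destruct (intensity_bounds u0 i near_class_u0 Hi).
  apply sqrt_lt_R0. lra.
Qed.

Lemma length_net_pos : (1 <= length net)%nat.
Proof. pose proof u0_In_net. destruct net; [contradiction | simpl; lia]. Qed.

Lemma sqnorm_sub_u0_le9 u : In u net -> sqnorm p (fun j => u j - u0 j) <= 9.
Proof.
  intros Hu. destruct (In_net u Hu) as [[g [Hg Hl]] _].
  rewrite <- (sqnorm_sub_matvec_orthonormal p D HD).
  eapply Rle_trans; [apply sqnorm_le_sqr_l1norm|].
  pose proof (l1norm_sub_triangle p (matvec p D u) f (matvec p D u0)).
  pose proof (l1norm_sub_triangle p (matvec p D u) g f).
  pose proof (l1norm_sub_in_F_le2 p s D g f Hg Hf).
  pose proof l1norm_signal_u0_sub_le_quarter. rewrite l1norm_sub_sym in H2.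
  pose proof (l1norm_nonneg p (fun j => matvec p D u j - matvec p D u0 j)).
  nra.
Qed.

Lemma l1norm_true_intensity_sub_le : l1norm n (fun i => true_intensity i - intensity u0 i) <= / 4.
Proof.
  unfold l1norm, true_intensity, intensity.
  rewrite (rsum_ext n _ (fun i => T * Rabs (matvec p A (fun j => f j - matvec p D u0 j) i)))
    by (intros; rewrite matvec_sub, <- Rmult_minus_distr_l, Rabs_mult, Rabs_right by lra; reflexivity).
  rewrite rsum_scal.
  pose proof (l1norm_matvec_sensing_le a_l a_u n p At A Hal Hn HAt HA (fun j => f j - matvec p D u0 j)).
  pose proof l1norm_signal_u0_sub_le. rewrite l1norm_sub_sym in H0.
  assert (T * / (4 * (T + 1)) <= / 4).
  { apply (Rmult_le_reg_r (4 * (T + 1))); [lra|].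
    rewrite Rmult_assoc, Rinv_l by lra. field_simplify; lra. }
  pose proof (l1norm_nonneg n (matvec p A (fun j => f j - matvec p D u0 j))).
  unfold l1norm in *. nra.
Qed.

Lemma bhattacharyya_exponent_sum_le u : In u net ->
  rsum n (fun i => - (intensity u i - intensity u0 i) / 2 - true_intensity i
                   + true_intensity i * (sqrt (intensity u i) / sqrt (intensity u0 i)))
  <= / 2 - rate_const * T * (1 - delta) * sqnorm p (fun j => u j - u0 j).
Proof.
  intros Hu. pose proof (INR_n_pos n Hn). pose proof T_div_4n_pos.
  assert (Hk : 0 < kappa) by (unfold kappa; lra).
  destruct (In_net u Hu) as [Hv _].
  set (B := 5 * (T / (4 * INR n))).
  apply Rle_trans with (rsum n (fun i => - / (8 * B) * (intensity u i - intensity u0 i) ^ 2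
                                          + 2 * Rabs (true_intensity i - intensity u0 i))).
  - apply rsum_le. intros i Hi.
    destruct (intensity_bounds u i Hv Hi). destruct (intensity_bounds u0 i near_class_u0 Hi).
    eapply Rle_trans; [apply (bhattacharyya_exponent_le _ _ _ B); unfold B; lra|].
    right. unfold Rdiv. ring.
  - rewrite rsum_add, !rsum_scal.
    pose proof (intensity_gap_lower u u0 Hu u0_In_net). pose proof l1norm_true_intensity_sub_le.
    assert (E : / (8 * B) * (T ^ 2 * (1 - delta) * sqnorm p (fun j => u j - u0 j) / (kappa ^ 2 * INR n))
                = rate_const * T * (1 - delta) * sqnorm p (fun j => u j - u0 j))
      by (unfold B, rate_const; field; split; lra).
    assert (0 < / (8 * B)) by (apply Rinv_0_lt_compat; unfold B; lra).
    unfold sqnorm, l1norm in *. nra.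
Qed.

Definition affinity (u : nat -> R) (y : list nat) : R :=
  rprod n (fun i => exp (- (intensity u i - intensity u0 i) / 2)
                    * (sqrt (intensity u i) / sqrt (intensity u0 i)) ^ nth i y 0%nat).

Lemma likelihood_affinity u y : In u net -> length y = n ->
  likelihood u y = likelihood u0 y * (affinity u y) ^ 2.
Proof.
  intros Hu Hy. destruct (In_net u Hu) as [Hv _]. pose proof T_div_4n_pos.
  unfold likelihood, joint_pmf, affinity. rewrite Hy.
  simpl. rewrite Rmult_1_r, <- !rprod_mul. apply rprod_ext. intros i Hi.
  destruct (intensity_bounds u i Hv Hi). destruct (intensity_bounds u0 i near_class_u0 Hi).
  rewrite <- (poisson_pmf_likelihood_ratio (intensity u0 i) (intensity u i)) by lra. simpl. ring.
Qed.

Lemma affinity_nonneg u y : 0 <= affinity u y.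
Proof.
  apply rprod_nonneg. intros i Hi.
  apply Rmult_le_pos; [left; apply exp_pos|]. apply pow_le, Rle_mult_inv_pos; [apply sqrt_pos|].
  apply sqrt_intensity_u0_pos; auto.
Qed.

Lemma mle_spec y : In (mle y) net /\ forall u, In u net -> likelihood u y <= likelihood (mle y) y.
Proof.
  pose proof u0_In_net as Hnet. unfold mle. destruct net as [|v l]; [contradiction|].
  destruct (argmax_spec (fun u => likelihood u y) (hd (fun _ => 0) (v :: l)) (v :: l)) as [Hin Hmax].
  split; [destruct Hin as [<-|Hin]; simpl; auto | intros; apply Hmax; right; auto].
Qed.

Lemma affinity_mle_ge1 y : length y = n -> 1 <= affinity (mle y) y.
Proof.
  intros Hy. destruct (mle_spec y) as [Hin Hmax].
  pose proof (Hmax u0 u0_In_net) as Hle. rewrite (likelihood_affinity (mle y) y Hin Hy) in Hle.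
  assert (0 < likelihood u0 y).
  { apply rprod_pos. intros i Hi. rewrite Hy in Hi. apply poisson_pmf_pos.
    pose proof T_div_4n_pos. destruct (intensity_bounds u0 i near_class_u0 Hi). lra. }
  pose proof (affinity_nonneg (mle y) y).
  destruct (Rle_dec 1 (affinity (mle y) y)) as [|Hlt]; auto.
  assert (affinity (mle y) y ^ 2 < 1) by (simpl; nra). nra.
Qed.

Lemma true_intensity_nonneg i : (i < n)%nat -> 0 <= true_intensity i.
Proof.
  intros Hi. destruct Hf as [Hf1 [Hf2 _]]. unfold true_intensity.
  apply Rmult_le_pos; [lra | apply matvec_nonneg; auto].
  intros. apply (sensing_entry_nonneg a_l a_u n p At A); auto.
Qed.

Lemma radius_pos : 0 < radius.
Proof.
  assert (0 <= ln (INR (length net)))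
    by (rewrite <- ln_1; apply ln_le; [lra | apply (le_INR 1), length_net_pos]).
  assert (0 <= ln T) by (rewrite <- ln_1; apply ln_le; lra).
  pose proof rate_const_pos. unfold radius.
  apply Rdiv_lt_0_compat; [lra|]. repeat apply Rmult_lt_0_compat; lra.
Qed.

(* When the maximiser is farther than [radius] from [u0], its squared error (at most [9]) is
   charged to its affinity, which is at least [1]. *)
Definition far_weight (u : nat -> R) (y : list nat) : R :=
  (if Rlt_dec radius (sqnorm p (fun j => u j - u0 j)) then 9 else 0) * affinity u y.

Lemma sqnorm_mle_estimate_sub_le y : length y = n ->
  sqnorm p (fun j => mle_estimate y j - f j)
  <= 2 * radius + 2 / T + 2 * lsum (fun u => far_weight u y) net.
Proof.
  intros Hy. eapply Rle_trans; [apply (sqnorm_sub_triangle p _ (matvec p D u0))|].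
  unfold mle_estimate. rewrite (sqnorm_sub_matvec_orthonormal p D HD).
  assert (Hsignal : sqnorm p (fun j => matvec p D u0 j - f j) <= / T).
  { eapply Rle_trans; [apply sqnorm_le_sqr_l1norm|].
    pose proof l1norm_signal_u0_sub_le. pose proof (l1norm_nonneg p (fun j => matvec p D u0 j - f j)).
    assert (/ (4 * (T + 1)) <= / T) by (apply Rinv_le_contravar; lra).
    assert (/ (4 * (T + 1)) <= 1) by (rewrite <- Rinv_1; apply Rinv_le_contravar; lra).
    simpl. nra. }
  assert (Hmle : sqnorm p (fun j => mle y j - u0 j) <= radius + lsum (fun u => far_weight u y) net).
  { destruct (mle_spec y) as [Hin _]. pose proof radius_pos.
    assert (Hnn : forall u, In u net -> 0 <= far_weight u y).
    { intros. apply Rmult_le_pos; [destruct (Rlt_dec _ _); lra | apply affinity_nonneg]. }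
    pose proof (lsum_nonneg _ net Hnn).
    destruct (Rlt_dec radius (sqnorm p (fun j => mle y j - u0 j))) as [Hfar|]; [|lra].
    pose proof (lsum_term_le (fun u => far_weight u y) net (mle y) Hnn Hin) as Hterm.
    unfold far_weight at 1 in Hterm. destruct (Rlt_dec _ _); [|contradiction].
    pose proof (affinity_mle_ge1 y Hy). pose proof (sqnorm_sub_u0_le9 (mle y) Hin). lra. }
  unfold Rdiv. lra.
Qed.

Lemma box_expect_affinity_le N u : In u net ->
  box_expect n N true_intensity (affinity u)
  <= exp (/ 2 - rate_const * T * (1 - delta) * sqnorm p (fun j => u j - u0 j)).
Proof.
  intros Hu. unfold affinity.
  eapply Rle_trans; [apply box_expect_rprod_le; [apply true_intensity_nonneg|]|].
  - intros i Hi. apply Rle_mult_inv_pos; [apply sqrt_pos | apply sqrt_intensity_u0_pos; auto].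
  - apply exp_le, bhattacharyya_exponent_sum_le; auto.
Qed.

Lemma box_expect_far_weight_term_le N u : In u net ->
  box_expect n N true_intensity (far_weight u) <= 9 * exp (/ 2 - rate_const * T * (1 - delta) * radius).
Proof.
  intros Hu. pose proof rate_const_pos.
  assert (Hc : 0 < rate_const * T * (1 - delta)) by (repeat apply Rmult_lt_0_compat; lra).
  pose proof (exp_pos (/ 2 - rate_const * T * (1 - delta) * radius)).
  unfold far_weight. rewrite box_expect_scal.
  destruct (Rlt_dec _ _) as [Hfar|]; [|rewrite Rmult_0_l; lra].
  apply Rmult_le_compat_l; [lra|]. eapply Rle_trans; [apply box_expect_affinity_le; auto|].
  apply exp_le.
  assert (rate_const * T * (1 - delta) * radius
          <= rate_const * T * (1 - delta) * sqnorm p (fun j => u j - u0 j))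
    by (apply Rmult_le_compat_l; lra).
  lra.
Qed.

Lemma length_net_mul_far_weight_bound_le :
  INR (length net) * (9 * exp (/ 2 - rate_const * T * (1 - delta) * radius)) <= / T.
Proof.
  pose proof rate_const_pos. pose proof (exp_pos (9 / 2)). pose proof nine_le_exp_nine_halves.
  assert (Hcr : rate_const * T * (1 - delta) * radius = ln (INR (length net)) + ln T + 5)
    by (unfold radius; field; lra).
  assert (HS : 0 < INR (length net)) by (apply lt_0_INR; pose proof length_net_pos; lia).
  assert (E : exp (/ 2 - rate_const * T * (1 - delta) * radius)
              = / exp (9 / 2) * / (INR (length net) * T)).
  { rewrite Hcr.
    replace (/ 2 - (ln (INR (length net)) + ln T + 5)) with (- (9 / 2 + ln (INR (length net)) + ln T))
      by field.
    rewrite exp_Ropp, !exp_plus, !exp_ln by lra. field. lra. }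
  rewrite E.
  replace (INR (length net) * (9 * (/ exp (9 / 2) * / (INR (length net) * T))))
    with (9 / exp (9 / 2) * / T) by (field; lra).
  assert (9 / exp (9 / 2) <= 1).
  { apply (Rmult_le_reg_r (exp (9 / 2))); [lra|]. unfold Rdiv. rewrite Rmult_assoc, Rinv_l by lra. lra. }
  assert (0 < / T) by (apply Rinv_0_lt_compat; lra). nra.
Qed.

Lemma box_expect_far_weight_le N : lsum (fun u => box_expect n N true_intensity (far_weight u)) net <= / T.
Proof.
  eapply Rle_trans; [apply lsum_le_length_mul, box_expect_far_weight_term_le|].
  apply length_net_mul_far_weight_bound_le.
Qed.

Lemma box_expect_mle_loss_le N :
  box_expect n N true_intensity (fun y => sqnorm p (fun j => mle_estimate y j - f j))
  <= 2 * radius + 4 / T.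
Proof.
  eapply Rle_trans.
  { apply box_expect_le; [apply true_intensity_nonneg|].
    intros y Hy. apply (sqnorm_mle_estimate_sub_le y (In_box_length n N y Hy)). }
  rewrite box_expect_add, box_expect_scal, (box_expect_lsum n N true_intensity far_weight net).
  pose proof radius_pos. pose proof (box_expect_far_weight_le N).
  assert (box_expect n N true_intensity (fun _ => 2 * radius + 2 / T) <= 2 * radius + 2 / T).
  { apply box_expect_const_le; [apply true_intensity_nonneg|].
    assert (0 < 2 / T) by (apply Rdiv_lt_0_compat; lra). lra. }
  unfold Rdiv in *. lra.
Qed.
End TrueSignal.

Lemma length_net_le : INR (length net) <= (INR p * (2 * INR M + 1)) ^ s.
Proof.
  eapply Rle_trans; [apply le_INR, filter_length_le|].
  rewrite length_map, length_tuples. unfold grid. rewrite length_prod, !length_seq.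
  rewrite pow_INR, mult_INR, S_INR, mult_INR. replace (INR 2) with 2 by (simpl; ring). lra.
Qed.

Lemma ln_length_net_le : (1 <= length net)%nat -> INR M <= 4 * INR p * INR p * (T + 2) ->
  ln (INR (length net)) <= INR s * (ln 24 + 3 * ln (INR p) + ln (T + 1)).
Proof.
  intros Hnet HMle.
  assert (Hp1 : 1 <= INR p) by (apply (le_INR 1); auto).
  assert (HM1 : 1 <= INR M) by (apply (le_INR 1); auto).
  assert (Hgrid : INR p * (2 * INR M + 1) <= 24 * INR p ^ 3 * (T + 1)).
  { assert (HP : 1 <= INR p * INR p) by nra.
    assert (HPT : 1 <= INR p * INR p * T) by nra.
    replace (4 * INR p * INR p * (T + 2)) with (4 * (INR p * INR p * T) + 8 * (INR p * INR p)) in HMle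
      by ring.
    replace (24 * INR p ^ 3 * (T + 1)) with (INR p * (24 * (INR p * INR p * T) + 24 * (INR p * INR p)))
      by ring.
    apply Rmult_le_compat_l; lra. }
  eapply Rle_trans; [apply ln_le; [apply lt_0_INR; lia | apply length_net_le]|].
  rewrite ln_pow by nra. apply Rmult_le_compat_l; [apply pos_INR|].
  eapply Rle_trans; [apply ln_le; [nra | apply Hgrid]|].
  rewrite !ln_mult, ln_pow by (repeat apply Rmult_lt_0_compat; try apply pow_lt; lra).
  simpl INR. lra.
Qed.

Lemma radius_le_rate : (1 <= s)%nat -> (1 <= length net)%nat -> INR M <= 4 * INR p * INR p * (T + 2) ->
  2 * radius + 4 / T <= (240 * kappa ^ 2 + 4) * minimax_rate p s T delta.
Proof.
  intros Hs Hnet1 HMle. unfold minimax_rate.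
  pose proof ln_2_bounds as Hl2.
  assert (Hp1 : 1 <= INR p) by (apply (le_INR 1); auto).
  assert (Hs1 : 1 <= INR s) by (apply (le_INR 1); auto).
  set (Lp := ln (INR p)). set (Lt := ln (T + 1)).
  assert (HLp : 0 <= Lp) by (unfold Lp; rewrite <- ln_1; apply ln_le; lra).
  assert (HLt : ln 2 <= Lt) by (unfold Lt; apply ln_le; lra).
  set (X := INR s * (Lp + Lt) / ln 2).
  assert (HX : 1 <= X).
  { unfold X. apply (Rmult_le_reg_r (ln 2)); [lra|].
    unfold Rdiv. rewrite Rmult_assoc, Rinv_l by lra. nra. }
  assert (HR : INR s * log2 (INR p) / ((1 - delta) * T) + INR s * log2 (T + 1) / ((1 - delta) * T)
               = X / ((1 - delta) * T)) by (unfold X, log2, Lp, Lt; field; repeat split; lra).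
  rewrite HR.
  assert (Hln24 : ln 24 <= 5 * ln 2).
  { replace (5 * ln 2) with (INR 5 * ln 2) by (simpl; ring). rewrite <- ln_pow by lra.
    apply ln_le; simpl; lra. }
  assert (HlnT : ln T <= Lt) by (unfold Lt; apply ln_le; lra).
  pose proof (ln_length_net_le Hnet1 HMle) as Hnet. fold Lp Lt in Hnet.
  assert (Hnum : ln (INR (length net)) + ln T + 5 <= 12 * X).
  { assert (INR s * (ln 24 + 3 * Lp + Lt) <= INR s * (3 * Lp + 6 * Lt)) by (apply Rmult_le_compat_l; lra).
    assert (INR s * (Lp + Lt) <= X).
    { unfold X, Rdiv. rewrite <- (Rmult_1_r (INR s * (Lp + Lt))) at 1.
      apply Rmult_le_compat_l; [nra|]. rewrite <- Rinv_1. apply Rinv_le_contravar; lra. }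
    nra. }
  pose proof rate_const_pos.
  assert (Hrad : radius <= 12 * X / (rate_const * T * (1 - delta))).
  { unfold radius, Rdiv. apply Rmult_le_compat_r; [|auto].
    left. apply Rinv_0_lt_compat. repeat apply Rmult_lt_0_compat; lra. }
  assert (E : 12 * X / (rate_const * T * (1 - delta)) = 120 * kappa ^ 2 * (X / ((1 - delta) * T))).
  { unfold rate_const. assert (0 < kappa) by (unfold kappa; lra). field. repeat split; lra. }
  assert (HT4 : 4 / T <= 4 * (X / ((1 - delta) * T))).
  { unfold Rdiv. rewrite Rinv_mult.
    assert (1 <= X * / (1 - delta)).
    { apply (Rmult_le_reg_r (1 - delta)); [lra|]. rewrite Rmult_assoc, Rinv_l by lra. lra. }
    assert (0 < / T) by (apply Rinv_0_lt_compat; lra). nra. }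
  lra.
Qed.
End NetMLE.

(** * The constant estimator *)

Lemma max_abs2_nonneg p D : 0 <= max_abs2 p D.
Proof.
  unfold max_abs2. induction (flat_map _ _) as [|x l IH]; simpl; [lra|].
  eapply Rle_trans; [apply IH | apply Rmax_r].
Qed.

Lemma sqr_Rabs_le_max_abs2 p D j k : (j < p)%nat -> (k < p)%nat -> Rabs (D j k) ^ 2 <= max_abs2 p D.
Proof.
  intros Hj Hk. unfold max_abs2.
  assert (Hin : In (Rabs (D j k) ^ 2)
                   (flat_map (fun j => map (fun k => Rabs (D j k) ^ 2) (seq 0 p)) (seq 0 p))).
  { apply in_flat_map. exists j. split; [apply in_seq; lia|].
    apply (in_map (fun k => Rabs (D j k) ^ 2)), in_seq. lia. }
  induction (flat_map _ _) as [|x l IH]; [destruct Hin|].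
  destruct Hin as [<-|Hin]; simpl; [apply Rmax_l | eapply Rle_trans; [apply IH; auto | apply Rmax_r]].
Qed.

Section Uniform.
Variables (p s : nat) (D : nat -> nat -> R) (f : nat -> R).
Hypothesis HD : orthonormal p D.
Hypothesis HD0 : first_col_const p D.
Hypothesis Hp : (1 <= p)%nat.
Hypothesis Hf : in_F p s D f.

Lemma sqnorm_in_F_le1 : sqnorm p f <= 1.
Proof.
  destruct Hf as [H1 [H2 _]]. unfold sqnorm. rewrite <- H2. apply rsum_le. intros k Hk.
  assert (f k <= rsum p f) by (apply rsum_term_le; auto). pose proof (H1 k Hk). simpl. nra.
Qed.

Lemma sqr_coord_le_max_abs2 j : (j < p)%nat -> coord p D f j ^ 2 <= max_abs2 p D.
Proof.
  intros Hj. destruct Hf as [H1 [H2 _]].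
  set (m := max_abs2 p D). assert (Hm : 0 <= m) by apply max_abs2_nonneg.
  assert (Habs : Rabs (coord p D f j) <= sqrt m).
  { unfold coord. eapply Rle_trans; [apply rsum_abs_le|].
    replace (sqrt m) with (rsum p (fun k => sqrt m * f k)) by (rewrite rsum_scal, H2; ring).
    apply rsum_le. intros k Hk. rewrite Rabs_mult, (Rabs_right (f k)) by (apply Rle_ge; auto).
    apply Rmult_le_compat_r; [auto|].
    rewrite <- (sqrt_pow2 (Rabs (D k j))) by apply Rabs_pos.
    apply sqrt_le_1_alt, sqr_Rabs_le_max_abs2; auto. }
  rewrite <- pow2_abs. replace m with (sqrt m ^ 2) by (simpl; rewrite Rmult_1_r; apply sqrt_sqrt; auto).
  apply pow_incr. split; [apply Rabs_pos | auto].
Qed.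

(* The coordinates of [f] along [d_2, ..., d_p]; its [d_1]-coordinate is that of [1/p]. *)
Definition coord_tail (j : nat) : R := if Nat.eqb j 0 then 0 else coord p D f j.

Lemma sqnorm_uniform_sub : sqnorm p (fun j => / INR p - f j) = sqnorm p coord_tail.
Proof.
  rewrite <- (sqnorm_matvec_orthonormal p D HD coord_tail). apply rsum_ext. intros k Hk.
  assert (Hsp : 0 < sqrt (INR p)) by (apply sqrt_lt_R0, lt_0_INR; lia).
  assert (Hss : sqrt (INR p) * sqrt (INR p) = INR p) by (apply sqrt_sqrt, pos_INR).
  assert (E : f k - matvec p D coord_tail k = / INR p).
  { rewrite <- (matvec_coord p D HD f k Hk) at 1. rewrite <- matvec_sub. unfold matvec.
    rewrite (rsum_ext p _ (fun j => (D k j * coord p D f j) * (if Nat.eqb 0 j then 1 else 0))).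
    - rewrite rsum_kronecker, (coord_first_col p D HD0 f), HD0 by (apply Hf || lia).
      rewrite <- Rinv_mult, Hss. reflexivity.
    - intros [|j] Hj; unfold coord_tail; simpl; ring. }
  replace (/ INR p - f k) with (- matvec p D coord_tail k) by lra. simpl. ring.
Qed.

Lemma sqnorm_uniform_sub_le : sqnorm p (fun j => / INR p - f j) <= Rmin (INR s * max_abs2 p D) 1.
Proof.
  rewrite sqnorm_uniform_sub. apply Rmin_glb.
  - unfold sqnorm. replace p with (S (p - 1)) at 1 by lia.
    rewrite rsum_recl. unfold coord_tail at 1. simpl Nat.eqb.
    change (rsum (p - 1) (fun i => coord_tail (S i) ^ 2)) with
           (lsum (fun i => coord_tail (S i) ^ 2) (seq 0 (p - 1))).
    rewrite <- (lsum_map (fun i => coord_tail i ^ 2) S), seq_shift.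
    destruct Hf as [_ [_ Hsparse]]. unfold Dbar_l0 in Hsparse.
    apply le_INR in Hsparse. pose proof (max_abs2_nonneg p D).
    eapply Rle_trans with (0 ^ 2 + INR (count_nz 1 (p - 1) (coord p D f)) * max_abs2 p D).
    + apply Rplus_le_compat_l. apply lsum_seq_le_count_nz; intros i Hi; unfold coord_tail;
        destruct (Nat.eqb_spec i 0); try lia.
      * split; [apply pow2_ge_0 | apply sqr_coord_le_max_abs2; lia].
      * intros Hz. rewrite Hz. ring.
    + simpl. rewrite Rmult_0_l, Rplus_0_l. apply Rmult_le_compat_r; auto.
  - apply Rle_trans with (sqnorm p (coord p D f)).
    + apply rsum_le. intros i Hi. unfold coord_tail. destruct (Nat.eqb i 0); [|lra].
      simpl. rewrite Rmult_0_l. apply pow2_ge_0.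
    + rewrite <- (sqnorm_matvec_orthonormal p D HD). unfold sqnorm.
      rewrite (rsum_ext p _ (fun k => f k ^ 2)) by (intros; rewrite matvec_coord; auto).
      apply sqnorm_in_F_le1.
Qed.
End Uniform.

Lemma expect_le_weaken n lam g B B' : expect_le n lam g B -> B <= B' -> expect_le n lam g B'.
Proof. intros HB Hle N. specialize (HB N). lra. Qed.

Lemma exists_nat_between T : 0 < T -> exists k : nat, T <= INR k <= T + 1.
Proof.
  intros HT. destruct (archimed T) as [H1 H2].
  assert (Hz : (0 <= up T)%Z) by (apply le_IZR; lra).
  exists (Z.to_nat (up T)). rewrite INR_IZR_INZ, Z2Nat.id by auto. lra.
Qed.

Lemma mle_risk_le_rate a_l a_u n p s T delta D At A :
  a_l < a_u -> (1 <= n)%nat -> (1 <= p)%nat -> (1 <= s)%nat -> 1 <= T ->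
  orthonormal p D -> first_col_const p D ->
  (forall i j, (i < n)%nat -> (j < p)%nat -> a_l / sqrt (INR n) <= At i j <= a_u / sqrt (INR n)) ->
  (forall i j, (i < n)%nat -> (j < p)%nat ->
     A i j = (At i j + (a_u - 2 * a_l) / sqrt (INR n)) / (2 * (a_u - a_l) * sqrt (INR n))) ->
  0 <= delta < 1 ->
  (forall u, (l0 p u <= 2 * s)%nat -> (1 - delta) * sqnorm p u <= sqnorm n (matvec p At (matvec p D u))) ->
  exists fhat : list nat -> (nat -> R), forall f, in_F p s D f ->
    expect_le n (fun i => T * matvec p A f i) (fun y => sqnorm p (fun j => fhat y j - f j))
      ((240 * kappa a_l a_u ^ 2 + 4) * minimax_rate p s T delta).
Proof.
  intros Hal Hn Hp Hs HT HD HD0 HAt HA Hdelta HRIP.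
  destruct (exists_nat_between T) as [k [Hk1 Hk2]]; [lra|].
  (* resolution [1/M] of the net, with [p^2 / M <= 1 / (4 (T + 1))] *)
  set (M := (4 * p * p * (k + 1))%nat).
  assert (HM : (1 <= M)%nat) by (unfold M; nia).
  assert (Hp1 : 1 <= INR p) by (apply (le_INR 1); auto).
  assert (HMR : INR M = 4 * (INR p * INR p) * (INR k + 1))
    by (unfold M; rewrite !mult_INR, plus_INR; simpl; ring).
  assert (HMT : INR p * INR p / INR M <= / (4 * (T + 1))).
  { rewrite HMR. replace (INR p * INR p / (4 * (INR p * INR p) * (INR k + 1))) with (/ (4 * (INR k + 1)))
      by (field; nra).
    apply Rinv_le_contravar; lra. }
  assert (HMle : INR M <= 4 * INR p * INR p * (T + 2)) by (rewrite HMR; nra).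
  exists (mle_estimate p s T D A M). intros f Hf N.
  eapply Rle_trans.
  - apply (box_expect_mle_loss_le a_l a_u n p s T delta D At A M); auto.
  - apply (radius_le_rate a_l a_u n); auto.
    apply (length_net_pos n p s T D M Hn Hp HT HD HD0 HM HMT f Hf).
Qed.

Lemma uniform_risk_le n p s T D A f :
  (1 <= n)%nat -> (1 <= p)%nat -> 0 < T -> orthonormal p D -> first_col_const p D -> in_F p s D f ->
  (forall i j, (i < n)%nat -> (j < p)%nat -> 0 <= A i j) ->
  expect_le n (fun i => T * matvec p A f i) (fun y => sqnorm p (fun j => / INR p - f j))
    (Rmin (INR s * max_abs2 p D) 1).
Proof.
  intros Hn Hp HT HD HD0 Hf HA N.
  eapply Rle_trans; [apply box_expect_const_le|].
  - intros i Hi. apply Rmult_le_pos; [lra|]. apply matvec_nonneg; [auto | apply Hf].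
  - apply sqnorm_nonneg.
  - apply (sqnorm_uniform_sub_le p s D f); auto.
Qed.

Lemma ln_1_plus_ge T : 0 < T -> T / (1 + T) <= ln (1 + T).
Proof.
  intros HT.
  pose proof (exp_ineq1_le (- (T / (1 + T)))) as Hexp.
  replace (1 + - (T / (1 + T))) with (/ (1 + T)) in Hexp by (field; lra).
  assert (ln (/ (1 + T)) <= - (T / (1 + T))).
  { rewrite <- (ln_exp (- (T / (1 + T)))). apply ln_le; [apply Rinv_0_lt_compat; lra | auto]. }
  rewrite ln_Rinv in H by lra. lra.
Qed.

(* For [T < 1] the rate exceeds [1/2], since [log2 (T + 1) >= T / 2]. *)
Lemma minimax_rate_ge_half p s T delta : (1 <= p)%nat -> (1 <= s)%nat -> 0 < T < 1 -> 0 <= delta < 1 ->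
  / 2 <= minimax_rate p s T delta.
Proof.
  intros Hp Hs HT Hd. unfold minimax_rate, log2.
  pose proof ln_2_bounds as Hl2.
  assert (Hp1 : 1 <= INR p) by (apply (le_INR 1); auto).
  assert (Hs1 : 1 <= INR s) by (apply (le_INR 1); auto).
  assert (HLp : 0 <= ln (INR p) / ln 2)
    by (apply Rle_mult_inv_pos; [rewrite <- ln_1; apply ln_le|]; lra).
  assert (Hl : T / 2 <= ln (T + 1) / ln 2).
  { pose proof (ln_1_plus_ge T ltac:(lra)) as H. rewrite (Rplus_comm 1 T) in H.
    assert (T / 2 <= T / (T + 1)) by (apply Rmult_le_compat_l; [lra | apply Rinv_le_contravar; lra]).
    assert (0 <= ln (T + 1)) by (rewrite <- ln_1; apply ln_le; lra).
    assert (ln (T + 1) <= ln (T + 1) / ln 2).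
    { apply (Rmult_le_reg_r (ln 2)); [lra|]. unfold Rdiv. rewrite Rmult_assoc, Rinv_l by lra. nra. }
    lra. }
  assert (0 <= INR s * (ln (INR p) / ln 2) / ((1 - delta) * T))
    by (apply Rle_mult_inv_pos; nra).
  assert (/ 2 <= INR s * (ln (T + 1) / ln 2) / ((1 - delta) * T)).
  { apply (Rmult_le_reg_r ((1 - delta) * T)); [nra|].
    unfold Rdiv. rewrite Rmult_assoc, Rinv_l by nra.
    assert ((1 - delta) * T <= T) by nra. unfold Rdiv in Hl. nra. }
  unfold Rdiv in *. lra.
Qed.

Lemma Rmin_rate_eq r q : r < Rmin q 1 -> Rmin (Rmin r q) 1 = r.
Proof. intros Hr. unfold Rmin in *. repeat destruct (Rle_dec _ _); lra. Qed.

Lemma Rmin_le_twice r q : 0 <= q -> Rmin q 1 <= r \/ / 2 <= r -> Rmin q 1 <= 2 * Rmin (Rmin r q) 1.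
Proof. intros Hq Hr. unfold Rmin in *. repeat destruct (Rle_dec _ _); lra. Qed.

Theorem theorem2 :
  forall a_l a_u : R, a_l < a_u ->
  exists C_U : R, 0 < C_U /\
  forall (n p s : nat) (T delta : R)
         (D : nat -> nat -> R) (At A : nat -> nat -> R),
    (1 <= n)%nat -> (1 <= p)%nat -> (1 <= s)%nat -> 0 < T ->
    orthonormal p D -> first_col_const p D ->
    (* Assumption 1 *)
    (forall i j, (i < n)%nat -> (j < p)%nat ->
        a_l / sqrt (INR n) <= At i j <= a_u / sqrt (INR n)) ->
    (forall i j, (i < n)%nat -> (j < p)%nat ->
        A i j = (At i j + (a_u - 2 * a_l) / sqrt (INR n))
                / (2 * (a_u - a_l) * sqrt (INR n))) ->
    0 <= delta < 1 ->
    (* Assumption 2 *)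
    (forall u : nat -> R, (l0 p u <= 2 * s)%nat ->
        sqnorm n (matvec p At (matvec p D u)) <= (1 + delta) * sqnorm p u) ->
    (* Assumption 3 *)
    (forall u : nat -> R, (l0 p u <= 2 * s)%nat ->
        (1 - delta) * sqnorm p u <= sqnorm n (matvec p At (matvec p D u))) ->
    (* inf over estimators of the sup risk is <= the bound *)
    forall eps : R, 0 < eps ->
    exists fhat : list nat -> (nat -> R),
      forall f : nat -> R, in_F p s D f ->
        expect_le n (fun i => T * matvec p A f i)
          (fun y => sqnorm p (fun j => fhat y j - f j))
          (C_U * Rmin (Rmin
              (INR s * log2 (INR p) / ((1 - delta) * T)
               + INR s * log2 (T + 1) / ((1 - delta) * T))
              (INR s * max_abs2 p D)) 1 + eps).
Proof.
  intros a_l a_u Hal. exists (240 * kappa a_l a_u ^ 2 + 4).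
  assert (HC : 2 <= 240 * kappa a_l a_u ^ 2 + 4) by (pose proof (pow2_ge_0 (kappa a_l a_u)); lra).
  split; [lra|].
  intros n p s T delta D At A Hn Hp Hs HT HD HD0 HAt HA Hdelta _ HRIP eps Heps.
  fold (minimax_rate p s T delta). set (rate := minimax_rate p s T delta).
  set (q := INR s * max_abs2 p D).
  assert (Hq : 0 <= q) by (apply Rmult_le_pos; [apply pos_INR | apply max_abs2_nonneg]).
  assert (Hcase : (1 <= T /\ rate < Rmin q 1) \/ (Rmin q 1 <= rate \/ / 2 <= rate)).
  { destruct (Rle_lt_dec 1 T); [destruct (Rlt_dec rate (Rmin q 1))|]; [left | right; left | right; right];
      auto; [lra | apply minimax_rate_ge_half; auto]. }
  destruct Hcase as [[HT1 Hr]|Hcase].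
  - destruct (mle_risk_le_rate a_l a_u n p s T delta D At A) as [fhat Hfhat]; auto.
    exists fhat. intros f Hf. apply (expect_le_weaken _ _ _ _ _ (Hfhat f Hf)).
    rewrite Rmin_rate_eq by auto. unfold rate. lra.
  - exists (fun _ _ => / INR p). intros f Hf.
    apply (expect_le_weaken _ _ _ _ _ (uniform_risk_le n p s T D A f Hn Hp HT HD HD0 Hf
             (sensing_entry_nonneg a_l a_u n p At A Hal Hn HAt HA))).
    change (Rmin q 1 <= (240 * kappa a_l a_u ^ 2 + 4) * Rmin (Rmin rate q) 1 + eps).
    pose proof (Rmin_le_twice rate q Hq Hcase). pose proof (Rmin_glb q 1 0 Hq ltac:(lra)).
    assert (2 * Rmin (Rmin rate q) 1 <= (240 * kappa a_l a_u ^ 2 + 4) * Rmin (Rmin rate q) 1)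
      by (apply Rmult_le_compat_r; lra).
    lra.
Qed.
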